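(* Let $\Lambda\in(\mathbb{R}\setminus\{0\})^n$, $P\in\mathrm{Lip}_{\mathcal{X}}(\mathbb{C}^n,\mathbb{C}^n)$, $R>0$ with $\mathcal{X}(2R)>0$, and $\theta=R/\mathcal{X}(2R)$. For $v_0\in\bar B_R$ and $0<\epsilon\le1$, let $a^\epsilon(\tau)$, $|\tau|\le\theta$, be the solution of $$\frac{\partial a}{\partial\tau}=\Phi_{\tau\epsilon^{-1}\Lambda}P(\Phi_{-\tau\epsilon^{-1}\Lambda}a),\qquad a(0)=v_0.$$ Define $I(\tau)=\int_0^\tau\big(y^{s\epsilon^{-1}}(a^\epsilon(s))-\langle\langle P\rangle\rangle(a^\epsilon(s))\big)\,ds$. Then there is a function $\kappa(\epsilon)$, depending only on $R,\Lambda,P,\mathcal{X}$ (not on $v_0\in\bar B_R$), with $\kappa(\epsilon)\to0$ as $\epsilon\to0$, such that $|I(\tau)|\le\kappa(\epsilon)$ for all $|\tau|\le\theta$.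
   Context: $B_R=\{v:|v|<R\}$. For a non-decreasing continuous $\mathcal{X}:\mathbb{R}_+\to\mathbb{R}_+$, $\mathrm{Lip}_{\mathcal{X}}(\mathbb{C}^n,\mathbb{C}^n)$ is the set of continuous vector fields $f$ with $\sup_{B_R}|f|\le\mathcal{X}(R)$ and $\mathrm{Lip}(f|_{B_R})\le\mathcal{X}(R)$ for all $R\ge0$. $\Phi_w=\mathrm{diag}(e^{\mathbf{i}w_1},\dots,e^{\mathbf{i}w_n})$; $y^t(a)=\Phi_{\Lambda t}P(\Phi_{-\Lambda t}a)$; $\langle\langle P\rangle\rangle(a)=\lim_{T\to\pm\infty}\frac1{|T|}\int_0^Ty^t(a)\,dt$ (this limit exists). The solution $a^\epsilon$ exists on $|\tau|\le\theta$ and stays in $\bar B_{2R}$. *)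

From Stdlib Require Import Reals Lra ClassicalEpsilon.
Open Scope R_scope.

(* Complex numbers as pairs (Re, Im). *)
Definition C : Type := (R * R)%type.
Definition cadd (z w : C) : C := (fst z + fst w, snd z + snd w).
Definition csub (z w : C) : C := (fst z - fst w, snd z - snd w).
Definition cmul (z w : C) : C :=
  (fst z * fst w - snd z * snd w, fst z * snd w + snd z * fst w).
Definition cnorm2 (z : C) : R := fst z * fst z + snd z * snd z.
Definition expi (w : R) : C := (cos w, sin w).

(* Vectors of C^n: only the components k < n are meaningful. *)
Definition vec : Type := nat -> C.

Fixpoint sumR (n : nat) (f : nat -> R) : R :=
  match n with O => 0 | S m => sumR m f + f m end.

Definition vnorm (n : nat) (v : vec) : R := sqrt (sumR n (fun k => cnorm2 (v k))).
Definition vsub (u v : vec) : vec := fun k => csub (u k) (v k).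

(* A map vec -> vec that is a genuine map C^n -> C^n: its first n output
   components depend only on the first n input components. *)
Definition respects (n : nat) (f : vec -> vec) : Prop :=
  forall u v : vec, (forall k, (k < n)%nat -> u k = v k) ->
    forall k, (k < n)%nat -> f u k = f v k.

Definition nondecr_cont_nonneg (X : R -> R) : Prop :=
  (forall x, 0 <= x -> 0 <= X x) /\
  (forall x y, 0 <= x -> x <= y -> X x <= X y) /\
  (forall x, 0 <= x -> forall e, 0 < e -> exists d, 0 < d /\
     forall y, 0 <= y -> Rabs (y - x) < d -> Rabs (X y - X x) < e).

Definition Lip_X (n : nat) (X : R -> R) (f : vec -> vec) : Prop :=
  respects n f /\
  (forall v e, 0 < e -> exists d, 0 < d /\
     forall u, vnorm n (vsub u v) < d -> vnorm n (vsub (f u) (f v)) < e) /\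
  (forall r, 0 <= r ->
     (forall v, vnorm n v < r -> vnorm n (f v) <= X r) /\
     (forall u v, vnorm n u < r -> vnorm n v < r ->
        vnorm n (vsub (f u) (f v)) <= X r * vnorm n (vsub u v))).

Definition Phi (w : nat -> R) (a : vec) : vec := fun k => cmul (expi (w k)) (a k).

Definition yflow (Lam : nat -> R) (P : vec -> vec) (t : R) (a : vec) : vec :=
  Phi (fun k => Lam k * t) (P (Phi (fun k => - (Lam k * t)) a)).

(* Oriented Riemann integral of a real function (value arbitrary if the
   function is not Riemann integrable; independent of the proof otherwise). *)
Definition RInt (f : R -> R) (lo hi : R) : R :=
  epsilon (inhabits 0)
    (fun r => exists pr : Riemann_integrable f lo hi, RiemannInt pr = r).

Definition vint (g : R -> vec) (lo hi : R) : vec :=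
  fun k => (RInt (fun s => fst (g s k)) lo hi, RInt (fun s => snd (g s k)) lo hi).

Definition is_average (n : nat) (Lam : nat -> R) (P : vec -> vec) (a v : vec) : Prop :=
  forall k, (k < n)%nat ->
  forall e, 0 < e -> exists M, 0 < M /\
    forall T, M < Rabs T ->
      let I := vint (fun t => yflow Lam P t a) 0 T in
      Rabs (fst (I k) / T - fst (v k)) < e /\
      Rabs (snd (I k) / T - snd (v k)) < e.

Definition avgP (n : nat) (Lam : nat -> R) (P : vec -> vec) (a : vec) : vec :=
  epsilon (inhabits (fun _ => (0, 0))) (fun v => is_average n Lam P a v).

Definition deriv_within (f f' : R -> R) (lo hi : R) : Prop :=
  forall t, lo <= t <= hi -> forall e, 0 < e -> exists d, 0 < d /\
    forall h, h <> 0 -> lo <= t + h <= hi -> Rabs h < d ->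
      Rabs ((f (t + h) - f t) / h - f' t) < e.

Definition is_solution (n : nat) (Lam : nat -> R) (P : vec -> vec) (eps theta : R)
  (v0 : vec) (a : R -> vec) : Prop :=
  (forall k, (k < n)%nat -> a 0 k = v0 k) /\
  (forall k, (k < n)%nat ->
     deriv_within (fun t => fst (a t k))
                  (fun t => fst (yflow Lam P (t / eps) (a t) k)) (- theta) theta /\
     deriv_within (fun t => snd (a t k))
                  (fun t => snd (yflow Lam P (t / eps) (a t) k)) (- theta) theta).

Definition Ifun (n : nat) (Lam : nat -> R) (P : vec -> vec) (eps : R)
  (a : R -> vec) (tau : R) : vec :=
  vint (fun s => vsub (yflow Lam P (s / eps) (a s)) (avgP n Lam P (a s))) 0 tau.

From Pilot Require Import Defs.
From Stdlib Require Import ZArith Reals Lra Lia Psatz ClassicalEpsilon Classical List.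
From Coquelicot Require Import Coquelicot.
Open Scope R_scope.

(* Freeze the slow variable: on each of N pieces [s, s + h] of [0, tau] replace a by its
   value at s. The solution stays in the ball of radius 2 R0, so it is Lipschitz and the
   freezing costs O(th^2 / N). For frozen a, t |-> y^t(a) is almost periodic uniformly in
   a: a pigeonhole argument on the torus gives, in every interval of length 2 L(e0), a
   simultaneous near-return time of all the rotations e^{i Lam_k t}. Hence its means over
   windows of length T approach <<P>>(a) up to O(e0 + L(e0) / T), uniformly in a and in the
   window. Rescaling s = eps t turns a piece of length h into a window of length h / eps,
   so |I(tau)| = O(th^2 / N + e0 th + N eps L(e0)); choosing e0, then N, then eps makes
   this small, and kappa(eps) is the supremum of |I| over all admissible data. *)

(** * The Hermitian norm on C^n *)

Lemma sumR_ext n f g : (forall k, (k < n)%nat -> f k = g k) -> sumR n f = sumR n g.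
Proof.
 induction n; simpl; intros H; auto.
 rewrite IHn, H; auto; intros; apply H; lia.
Qed.

Lemma sumR_le n f g : (forall k, (k < n)%nat -> f k <= g k) -> sumR n f <= sumR n g.
Proof.
 induction n; simpl; intros H; [lra|].
 assert (f n <= g n) by (apply H; lia).
 assert (sumR n f <= sumR n g) by (apply IHn; intros; apply H; lia).
 lra.
Qed.

Lemma sumR_const n c : sumR n (fun _ => c) = INR n * c.
Proof. induction n; simpl sumR; [simpl; lra|]. rewrite IHn, S_INR; lra. Qed.

Lemma sumR_nonneg n f : (forall k, (k < n)%nat -> 0 <= f k) -> 0 <= sumR n f.
Proof.
 intros H. rewrite <- (Rmult_0_r (INR n)), <- sumR_const. apply sumR_le; auto.
Qed.

Lemma sumR_plus n f g : sumR n (fun k => f k + g k) = sumR n f + sumR n g.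
Proof. induction n; simpl; [lra|]. rewrite IHn; lra. Qed.

Lemma sumR_scal n c f : sumR n (fun k => c * f k) = c * sumR n f.
Proof. induction n; simpl; [lra|]. rewrite IHn; lra. Qed.

Lemma sumR_term_le n f k :
  (forall j, (j < n)%nat -> 0 <= f j) -> (k < n)%nat -> f k <= sumR n f.
Proof.
 induction n; intros H Hk; [lia|]. simpl.
 assert (0 <= sumR n f) by (apply sumR_nonneg; intros; apply H; lia).
 destruct (Nat.eq_dec k n) as [->|Hkn]; [lra|].
 assert (f k <= sumR n f) by (apply IHn; [intros; apply H|]; lia).
 assert (0 <= f n) by (apply H; lia).
 lra.
Qed.

Lemma Rle_of_sqr_le x y : 0 <= y -> x * x <= y * y -> x <= y.
Proof. intros. destruct (Rle_dec x 0); [lra|]. apply Rsqr_incr_0_var; unfold Rsqr; lra. Qed.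

Lemma sqrt_le_of_le_sqr x y : 0 <= y -> x <= y * y -> sqrt x <= y.
Proof.
 intros Hy H. destruct (Rle_dec x 0) as [Hx|Hx]; [rewrite sqrt_neg_0; auto|].
 apply Rle_of_sqr_le; auto. rewrite sqrt_sqrt; lra.
Qed.

Definition dotv (n : nat) (u v : vec) : R :=
  sumR n (fun k => fst (u k) * fst (v k) + snd (u k) * snd (v k)).
Definition sqv (n : nat) (u : vec) : R := sumR n (fun k => cnorm2 (u k)).

Lemma sqv_nonneg n u : 0 <= sqv n u.
Proof. apply sumR_nonneg; intros; unfold cnorm2; nra. Qed.

Lemma dotv_self n u : dotv n u u = sqv n u.
Proof. apply sumR_ext; intros; unfold cnorm2; ring. Qed.

Lemma cauchy_schwarz_step A B C x1 x2 y1 y2 : 0 <= B -> 0 <= C -> A * A <= B * C ->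
  (A + (x1*y1 + x2*y2)) * (A + (x1*y1 + x2*y2)) <= (B + (x1*x1 + x2*x2)) * (C + (y1*y1 + y2*y2)).
Proof.
 intros HB HC HA.
 set (p := x1*y1 + x2*y2). set (b := x1*x1 + x2*x2). set (c := y1*y1 + y2*y2).
 assert (Hp : p * p <= b * c)
   by (unfold p, b, c; pose proof (Rle_0_sqr (x1*y2 - x2*y1)); unfold Rsqr in *; nra).
 assert (0 <= b) by (unfold b; nra). assert (0 <= c) by (unfold c; nra).
 assert (2 * A * p <= B * c + C * b).
 { apply Rle_of_sqr_le; [nra|].
   assert (A * A * (p * p) <= B * C * (b * c)) by (apply Rmult_le_compat; auto; apply Rle_0_sqr).
   pose proof (Rle_0_sqr (B * c - C * b)); unfold Rsqr in *; nra. }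
 nra.
Qed.

Lemma dotv_cauchy_schwarz n u v : dotv n u v * dotv n u v <= sqv n u * sqv n v.
Proof.
 unfold dotv, sqv, cnorm2. induction n; simpl; [lra|].
 apply cauchy_schwarz_step; auto; apply sumR_nonneg; intros; nra.
Qed.

Lemma vnorm_nonneg n u : 0 <= vnorm n u.
Proof. apply sqrt_pos. Qed.

Lemma vnorm_sqr n u : vnorm n u * vnorm n u = sqv n u.
Proof. apply sqrt_sqrt, sqv_nonneg. Qed.

Lemma Rabs_dotv_le n u v : Rabs (dotv n u v) <= vnorm n u * vnorm n v.
Proof.
 pose proof (vnorm_nonneg n u); pose proof (vnorm_nonneg n v).
 apply Rle_of_sqr_le; [nra|].
 rewrite <- Rabs_mult, Rabs_pos_eq by nra.
 rewrite Rmult_assoc, (Rmult_comm (vnorm n v)), Rmult_assoc, vnorm_sqr, <- Rmult_assoc, vnorm_sqr.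
 apply dotv_cauchy_schwarz.
Qed.

Lemma vnorm_ext n u v : (forall k, (k < n)%nat -> u k = v k) -> vnorm n u = vnorm n v.
Proof. intros H; unfold vnorm; f_equal; apply sumR_ext; intros; rewrite H; auto. Qed.

Lemma cnorm2_le_sqv n v k : (k < n)%nat -> cnorm2 (v k) <= sqv n v.
Proof.
 intros Hk. apply (sumR_term_le n (fun k => cnorm2 (v k))); auto.
 intros; unfold cnorm2; nra.
Qed.

Lemma Rabs_fst_le_vnorm n v k : (k < n)%nat -> Rabs (fst (v k)) <= vnorm n v.
Proof.
 intros Hk. apply Rle_of_sqr_le; [apply vnorm_nonneg|]. rewrite vnorm_sqr.
 pose proof (cnorm2_le_sqv n v k Hk). unfold cnorm2 in *.
 rewrite <- Rabs_mult, Rabs_pos_eq; nra.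
Qed.

Lemma Rabs_snd_le_vnorm n v k : (k < n)%nat -> Rabs (snd (v k)) <= vnorm n v.
Proof.
 intros Hk. apply Rle_of_sqr_le; [apply vnorm_nonneg|]. rewrite vnorm_sqr.
 pose proof (cnorm2_le_sqv n v k Hk). unfold cnorm2 in *.
 rewrite <- Rabs_mult, Rabs_pos_eq; nra.
Qed.

Lemma vnorm_le_sum_Rabs n v :
  vnorm n v <= sumR n (fun k => Rabs (fst (v k)) + Rabs (snd (v k))).
Proof.
 unfold vnorm. induction n; simpl; [rewrite sqrt_0; lra|].
 set (A := sumR n (fun k => cnorm2 (v k))) in *.
 set (B := sumR n (fun k => Rabs (fst (v k)) + Rabs (snd (v k)))) in *.
 assert (HB : 0 <= B)
   by (apply sumR_nonneg; intros j _;
       pose proof (Rabs_pos (fst (v j))); pose proof (Rabs_pos (snd (v j))); lra).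
 pose proof (Rabs_pos (fst (v n))); pose proof (Rabs_pos (snd (v n))).
 apply sqrt_le_of_le_sqr; [lra|].
 assert (HA : 0 <= A) by (apply sumR_nonneg; intros; unfold cnorm2; nra).
 assert (sqrt A * sqrt A = A) by (apply sqrt_sqrt; auto). pose proof (sqrt_pos A).
 assert (cnorm2 (v n) = Rabs (fst (v n)) * Rabs (fst (v n)) + Rabs (snd (v n)) * Rabs (snd (v n)))
   by (unfold cnorm2; rewrite <- !Rabs_mult, !Rabs_pos_eq; nra).
 nra.
Qed.

Lemma vnorm_cadd_le n u v : vnorm n (fun k => cadd (u k) (v k)) <= vnorm n u + vnorm n v.
Proof.
 pose proof (vnorm_nonneg n u); pose proof (vnorm_nonneg n v).
 apply sqrt_le_of_le_sqr; [lra|].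
 assert (E : sqv n (fun k => cadd (u k) (v k)) = sqv n u + 2 * dotv n u v + sqv n v).
 { unfold sqv, dotv. rewrite <- sumR_scal, <- !sumR_plus.
   apply sumR_ext; intros; unfold cnorm2, cadd; simpl; ring. }
 change (sqv n (fun k => cadd (u k) (v k)) <= (vnorm n u + vnorm n v) * (vnorm n u + vnorm n v)).
 rewrite E, <- (vnorm_sqr n u), <- (vnorm_sqr n v).
 pose proof (Rabs_dotv_le n u v); pose proof (Rle_abs (dotv n u v)). nra.
Qed.

Lemma vnorm_vsub_triangle n u v w : vnorm n (vsub u w) <= vnorm n (vsub u v) + vnorm n (vsub v w).
Proof.
 eapply Rle_trans; [|apply vnorm_cadd_le]. right. apply vnorm_ext; intros.
 unfold vsub, csub, cadd; simpl. f_equal; ring.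
Qed.

Lemma vnorm_le_add_vsub n u v : vnorm n u <= vnorm n v + vnorm n (vsub u v).
Proof.
 eapply Rle_trans; [|apply vnorm_cadd_le]. right. apply vnorm_ext; intros.
 unfold vsub, csub, cadd; simpl. destruct (u k); simpl; f_equal; ring.
Qed.

Lemma vnorm_vsub_sym n u v : vnorm n (vsub u v) = vnorm n (vsub v u).
Proof. unfold vnorm; f_equal; apply sumR_ext; intros; unfold vsub, csub, cnorm2; simpl; ring. Qed.

Lemma vnorm_zero n : vnorm n (fun _ => (0, 0)) = 0.
Proof.
 unfold vnorm. replace (sumR n (fun k => cnorm2 (0, 0))) with 0; [apply sqrt_0|].
 transitivity (sumR n (fun _ => 0)); [rewrite sumR_const; ring|].
 apply sumR_ext; intros; unfold cnorm2; simpl; ring.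
Qed.

Lemma vnorm_vsub_self n u : vnorm n (vsub u u) = 0.
Proof.
 rewrite <- (vnorm_zero n). apply vnorm_ext; intros; unfold vsub, csub; f_equal; simpl; ring.
Qed.

Lemma vnorm_Phi n w u : vnorm n (Phi w u) = vnorm n u.
Proof.
 unfold vnorm, Phi; f_equal; apply sumR_ext; intros.
 unfold cnorm2, cmul, expi; simpl. pose proof (sin2_cos2 (w k)). unfold Rsqr in *. nra.
Qed.

Lemma vnorm_vsub_Phi n w u v : vnorm n (vsub (Phi w u) (Phi w v)) = vnorm n (vsub u v).
Proof.
 rewrite <- (vnorm_Phi n w (vsub u v)). apply vnorm_ext; intros.
 unfold vsub, Phi, csub, cmul; simpl. f_equal; ring.
Qed.

Lemma vnorm_P_le n X P r v : Lip_X n X P -> 0 <= r -> vnorm n v < r -> vnorm n (P v) <= X r.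
Proof. intros [_ [_ H]] Hr Hv. apply (proj1 (H r Hr)); auto. Qed.

Lemma vnorm_P_sub_le n X P r u v : Lip_X n X P -> 0 <= r -> vnorm n u < r -> vnorm n v < r ->
  vnorm n (vsub (P u) (P v)) <= X r * vnorm n (vsub u v).
Proof. intros [_ [_ H]] Hr Hu Hv. apply (proj2 (H r Hr)); auto. Qed.

Lemma Lip_X_nonneg n X P r : Lip_X n X P -> 0 < r -> 0 <= X r.
Proof.
 intros HL Hr. assert (H0 : vnorm n (fun _ => (0, 0)) < r) by (rewrite vnorm_zero; auto).
 pose proof (vnorm_P_le n X P r _ HL ltac:(lra) H0). pose proof (vnorm_nonneg n (P (fun _ => (0, 0)))).
 lra.
Qed.

Lemma vnorm_yflow_le n Lam X P r t b : Lip_X n X P -> 0 <= r -> vnorm n b < r ->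
  vnorm n (yflow Lam P t b) <= X r.
Proof.
 intros HL Hr Hb. unfold yflow. rewrite vnorm_Phi.
 apply (vnorm_P_le n X P r); auto. rewrite vnorm_Phi; auto.
Qed.

(** * One-variable calculus for [deriv_within] *)

Lemma continuous_induction (lo hi : R) (Q : R -> Prop) : lo <= hi -> Q lo ->
  (forall s, lo <= s < hi -> (forall t, lo <= t <= s -> Q t) ->
     exists eta, 0 < eta /\ forall t, s < t <= hi -> t < s + eta -> Q t) ->
  (forall s, lo < s <= hi -> (forall t, lo <= t < s -> Q t) -> Q s) ->
  forall t, lo <= t <= hi -> Q t.
Proof.
 intros Hle Q0 Hfw Hcl.
 set (E := fun x => lo <= x <= hi /\ forall t, lo <= t <= x -> Q t).
 assert (Hb : bound E) by (exists hi; intros x [Hx _]; lra).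
 assert (Elo : E lo) by (split; [lra|]; intros t Ht; replace t with lo by lra; auto).
 destruct (completeness E Hb (ex_intro _ lo Elo)) as [m [Hub Hlub]].
 assert (Hlm : lo <= m) by (apply Hub; auto).
 assert (Hmh : m <= hi) by (apply Hlub; intros x [Hx _]; lra).
 assert (Gm : forall t, lo <= t <= m -> Q t).
 { assert (G : forall t, lo <= t < m -> Q t).
   { intros t Ht. destruct (classic (exists x, E x /\ t < x)) as [[x [[_ Hx] Htx]]|Hn].
     - apply Hx; lra.
     - exfalso. assert (m <= t); [|lra]. apply Hlub. intros x Ex.
       destruct (Rle_dec x t); auto. exfalso; apply Hn; exists x; split; auto; lra. }
   intros t Ht. destruct (Rlt_dec t m); [apply G; lra|]. replace t with m by lra.
   destruct (Req_dec m lo) as [->|]; auto. apply Hcl; [lra|auto]. }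
 assert (m = hi) as ->.
 { destruct (Req_dec m hi); auto. exfalso.
   destruct (Hfw m ltac:(lra) Gm) as [eta [Heta Hq]].
   set (x := Rmin (m + eta/2) hi).
   assert (E x).
   { split; [unfold x, Rmin; destruct Rle_dec; lra|].
     intros t Ht. destruct (Rle_dec t m); [apply Gm; lra|].
     apply Hq; unfold x, Rmin in *; destruct Rle_dec; lra. }
   assert (x <= m) by (apply Hub; auto). unfold x, Rmin in *; destruct Rle_dec; lra. }
 auto.
Qed.

Lemma affine_bound_left_closure (phi : R -> R) c x s : x < s ->
  (forall e, 0 < e -> exists d, 0 < d /\ forall t, x <= t < s -> s - t < d -> phi s <= phi t + e) ->
  (forall t, x <= t < s -> phi t <= c * (t - x)) -> phi s <= c * (s - x).
Proof.
 intros Hxs Hc Hb. apply le_epsilon. intros e He.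
 destruct (Hc (e / 2) ltac:(lra)) as [d [Hd Hphi]].
 set (K := Rabs c + 1). assert (HK : 0 < K) by (unfold K; pose proof (Rabs_pos c); lra).
 set (h := Rmin (d / 2) (e / (2 * K))).
 assert (Hh : 0 < h) by (apply Rmin_pos; [lra|apply Rdiv_lt_0_compat; lra]).
 assert (Hhd : h <= d / 2) by apply Rmin_l.
 assert (HhK : K * h <= e / 2).
 { apply Rle_trans with (K * (e / (2 * K))); [apply Rmult_le_compat_l; [lra|apply Rmin_r]|].
   right; field; lra. }
 set (t := Rmax x (s - h)).
 assert (Ht : x <= t < s /\ s - t <= h) by (unfold t, Rmax; destruct Rle_dec; lra).
 specialize (Hphi t ltac:(lra) ltac:(lra)). specialize (Hb t ltac:(lra)).
 assert (- c * (s - t) <= K * (s - t)).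
 { apply Rmult_le_compat_r; [lra|]. unfold K. rewrite <- Rabs_Ropp. pose proof (Rle_abs (- c)); lra. }
 assert (K * (s - t) <= K * h) by (apply Rmult_le_compat_l; lra).
 replace (c * (t - x)) with (c * (s - x) - c * (s - t)) in Hb by ring.
 lra.
Qed.

Definition cont_within (f : R -> R) (lo hi : R) : Prop :=
  forall t, lo <= t <= hi -> forall e, 0 < e -> exists d, 0 < d /\
    forall t', lo <= t' <= hi -> Rabs (t' - t) < d -> Rabs (f t' - f t) < e.

Lemma lipschitz_cont_within f C lo hi : 0 <= C ->
  (forall t t', lo <= t <= hi -> lo <= t' <= hi -> Rabs (f t' - f t) <= C * Rabs (t' - t)) ->
  cont_within f lo hi.
Proof.
 intros HC H t Ht e He. exists (e / (C + 1)). split; [apply Rdiv_lt_0_compat; lra|].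
 intros t' Ht' Hd. eapply Rle_lt_trans; [apply H; auto|].
 apply Rle_lt_trans with ((C + 1) * Rabs (t' - t)).
 - apply Rmult_le_compat_r; [apply Rabs_pos|lra].
 - apply Rmult_lt_reg_r with (/ (C + 1)); [apply Rinv_0_lt_compat; lra|].
   replace ((C + 1) * Rabs (t' - t) * / (C + 1)) with (Rabs (t' - t)) by (field; lra).
   unfold Rdiv in Hd. lra.
Qed.

Lemma deriv_within_cont f f' lo hi : deriv_within f f' lo hi -> cont_within f lo hi.
Proof.
 intros H t Ht e He. destruct (H t Ht 1 Rlt_0_1) as [d [Hd Hh]].
 set (K := Rabs (f' t) + 1).
 assert (HK : 0 < K) by (unfold K; pose proof (Rabs_pos (f' t)); lra).
 exists (Rmin d (e / K)). split; [apply Rmin_pos; auto; apply Rdiv_lt_0_compat; auto|].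
 intros t' Ht' Hd'.
 assert (Hd1 : Rabs (t' - t) < d) by (eapply Rlt_le_trans; [exact Hd'|apply Rmin_l]).
 assert (Hd2 : Rabs (t' - t) < e / K) by (eapply Rlt_le_trans; [exact Hd'|apply Rmin_r]).
 destruct (Req_dec t' t) as [->|Hne]; [rewrite Rminus_eq_0, Rabs_R0; auto|].
 specialize (Hh (t' - t) ltac:(lra) ltac:(replace (t + (t' - t)) with t' by ring; auto) Hd1).
 replace (t + (t' - t)) with t' in Hh by ring.
 assert (Hq : Rabs ((f t' - f t) / (t' - t)) < K).
 { unfold K. eapply Rle_lt_trans; [|apply Rplus_lt_compat_l, Hh].
   replace ((f t' - f t) / (t' - t)) with (f' t + ((f t' - f t) / (t' - t) - f' t)) at 1 by ring.
   apply Rabs_triang. }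
 replace (f t' - f t) with ((f t' - f t) / (t' - t) * (t' - t)) by (field; lra).
 rewrite Rabs_mult.
 apply Rle_lt_trans with (K * Rabs (t' - t)); [apply Rmult_le_compat_r; [apply Rabs_pos|lra]|].
 apply Rmult_lt_reg_r with (/ K); [apply Rinv_0_lt_compat; auto|].
 replace (K * Rabs (t' - t) * / K) with (Rabs (t' - t)) by (field; lra). lra.
Qed.

Lemma deriv_within_sub_le_mul f f' lo hi M : deriv_within f f' lo hi ->
  (forall t, lo <= t <= hi -> f' t <= M) ->
  forall x y, lo <= x -> x <= y -> y <= hi -> f y - f x <= M * (y - x).
Proof.
 intros Hd HM x y Hx Hxy Hy. apply le_epsilon. intros ee Hee.
 set (eps := ee / (y - x + 1)).
 assert (Heps : 0 < eps) by (unfold eps; apply Rdiv_lt_0_compat; lra).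
 assert (Hc := deriv_within_cont _ _ _ _ Hd).
 assert (Main : forall t, x <= t <= hi -> f t - f x <= (M + eps) * (t - x)).
 { apply continuous_induction; [lra|lra| |].
   - intros s Hs IH. destruct (Hd s ltac:(lra) eps Heps) as [d [Hd0 Hh]].
     exists d. split; auto. intros t Ht1 Ht2.
     specialize (Hh (t - s) ltac:(lra) ltac:(replace (s + (t - s)) with t by ring; lra)
                   ltac:(rewrite Rabs_pos_eq; lra)).
     replace (s + (t - s)) with t in Hh by ring.
     apply Rabs_lt_between in Hh. assert (f' s <= M) by (apply HM; lra).
     assert (Hq : (f t - f s) / (t - s) * (t - s) <= (M + eps) * (t - s))
       by (apply Rmult_le_compat_r; lra).
     replace ((f t - f s) / (t - s) * (t - s)) with (f t - f s) in Hq by (field; lra).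
     assert (f s - f x <= (M + eps) * (s - x)) by (apply IH; lra). nra.
   - intros s Hs IH. destruct (Req_dec s x) as [->|Hsx]; [lra|].
     apply (affine_bound_left_closure (fun t => f t - f x)); [lra| |intros; apply IH; lra].
     intros e He. destruct (Hc s ltac:(lra) e He) as [d [Hd0 Hcs]].
     exists d; split; auto. intros t Ht Hst.
     specialize (Hcs t ltac:(lra) ltac:(rewrite Rabs_left; lra)).
     apply Rabs_lt_between in Hcs. lra. }
 specialize (Main y ltac:(lra)).
 assert (eps * (y - x) <= ee).
 { unfold eps. apply Rle_trans with (ee / (y - x + 1) * (y - x + 1)).
   - apply Rmult_le_compat_l; [apply Rlt_le, Rdiv_lt_0_compat|]; lra.
   - right; field; lra. }
 nra.
Qed.

Lemma deriv_within_opp f f' lo hi : deriv_within f f' lo hi ->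
  deriv_within (fun t => - f t) (fun t => - f' t) lo hi.
Proof.
 intros H t Ht e He. destruct (H t Ht e He) as [d [Hd Hh]]. exists d; split; auto.
 intros h H1 H2 H3. specialize (Hh h H1 H2 H3).
 replace ((- f (t + h) - - f t) / h - - f' t) with (- ((f (t + h) - f t) / h - f' t)) by (field; auto).
 rewrite Rabs_Ropp; auto.
Qed.

Lemma deriv_within_lipschitz f f' lo hi M : deriv_within f f' lo hi ->
  (forall t, lo <= t <= hi -> Rabs (f' t) <= M) ->
  forall x y, lo <= x <= hi -> lo <= y <= hi -> Rabs (f y - f x) <= M * Rabs (y - x).
Proof.
 intros Hd HM.
 assert (K : forall x y, lo <= x -> x <= y -> y <= hi -> Rabs (f y - f x) <= M * (y - x)).
 { intros x y H1 H2 H3. apply Rabs_le. split.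
   - assert (HMo : forall t, lo <= t <= hi -> - f' t <= M)
       by (intros t Ht; specialize (HM t Ht); apply Rabs_le_between in HM; lra).
     pose proof (deriv_within_sub_le_mul _ _ _ _ M (deriv_within_opp _ _ _ _ Hd) HMo x y H1 H2 H3). lra.
   - apply (deriv_within_sub_le_mul _ _ _ _ M Hd); auto.
     intros t Ht; specialize (HM t Ht); apply Rabs_le_between in HM; lra. }
 intros x y Hx Hy. destruct (Rle_dec x y).
 - rewrite (Rabs_pos_eq (y - x)) by lra. apply K; lra.
 - rewrite Rabs_minus_sym, (Rabs_left (y - x)) by lra.
   replace (- (y - x)) with (x - y) by ring. apply K; lra.
Qed.

Lemma deriv_within_plus f f' g g' lo hi : deriv_within f f' lo hi -> deriv_within g g' lo hi ->
  deriv_within (fun t => f t + g t) (fun t => f' t + g' t) lo hi.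
Proof.
 intros Hf Hg t Ht e He.
 destruct (Hf t Ht (e / 2) ltac:(lra)) as [d1 [Hd1 H1]].
 destruct (Hg t Ht (e / 2) ltac:(lra)) as [d2 [Hd2 H2]].
 exists (Rmin d1 d2); split; [apply Rmin_pos; auto|].
 intros h Hh Hr Ha.
 specialize (H1 h Hh Hr ltac:(eapply Rlt_le_trans; [exact Ha|apply Rmin_l])).
 specialize (H2 h Hh Hr ltac:(eapply Rlt_le_trans; [exact Ha|apply Rmin_r])).
 replace ((f (t + h) + g (t + h) - (f t + g t)) / h - (f' t + g' t)) with
   (((f (t + h) - f t) / h - f' t) + ((g (t + h) - g t) / h - g' t)) by (field; auto).
 eapply Rle_lt_trans; [apply Rabs_triang|]. lra.
Qed.

Lemma deriv_within_scal c f f' lo hi : deriv_within f f' lo hi ->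
  deriv_within (fun t => c * f t) (fun t => c * f' t) lo hi.
Proof.
 intros Hf t Ht e He. pose proof (Rabs_pos c) as Hc.
 destruct (Hf t Ht (e / (Rabs c + 1))) as [d [Hd H]]; [apply Rdiv_lt_0_compat; lra|].
 exists d; split; auto. intros h H1 H2 H3. specialize (H h H1 H2 H3).
 replace ((c * f (t + h) - c * f t) / h - c * f' t) with (c * ((f (t + h) - f t) / h - f' t))
   by (field; auto).
 rewrite Rabs_mult.
 apply Rle_lt_trans with ((Rabs c + 1) * Rabs ((f (t + h) - f t) / h - f' t)).
 - apply Rmult_le_compat_r; [apply Rabs_pos|lra].
 - apply Rmult_lt_reg_r with (/ (Rabs c + 1)); [apply Rinv_0_lt_compat; lra|].
   replace ((Rabs c + 1) * Rabs ((f (t + h) - f t) / h - f' t) * / (Rabs c + 1))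
     with (Rabs ((f (t + h) - f t) / h - f' t)) by (field; lra).
   unfold Rdiv in H; lra.
Qed.

Lemma deriv_within_const c lo hi : deriv_within (fun _ => c) (fun _ => 0) lo hi.
Proof.
 intros t Ht e He; exists 1; split; [lra|]. intros h H1 H2 H3.
 replace ((c - c) / h - 0) with 0 by (field; auto). rewrite Rabs_R0; auto.
Qed.

Lemma deriv_within_sumR n F F' lo hi :
  (forall k, (k < n)%nat -> deriv_within (F k) (F' k) lo hi) ->
  deriv_within (fun t => sumR n (fun k => F k t)) (fun t => sumR n (fun k => F' k t)) lo hi.
Proof.
 induction n; intros H; simpl; [apply deriv_within_const|].
 apply deriv_within_plus; [apply IHn; intros; apply H; lia|apply H; lia].
Qed.

Lemma deriv_within_subinterval f f' lo hi lo' hi' : deriv_within f f' lo hi ->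
  lo <= lo' -> hi' <= hi -> deriv_within f f' lo' hi'.
Proof.
 intros H H1 H2 t Ht e He. destruct (H t ltac:(lra) e He) as [d [Hd Hh]].
 exists d; split; auto. intros h A B C; apply Hh; auto; lra.
Qed.

Lemma common_delta (n : nat) (Pd : nat -> R -> Prop) :
  (forall k d d', (k < n)%nat -> 0 < d' <= d -> Pd k d -> Pd k d') ->
  (forall k, (k < n)%nat -> exists d, 0 < d /\ Pd k d) ->
  exists d, 0 < d /\ forall k, (k < n)%nat -> Pd k d.
Proof.
 induction n; intros Hm H; [exists 1; split; [lra|intros; lia]|].
 destruct IHn as [d1 [Hd1 H1]]; [intros; apply (Hm k d d'); auto; lia|intros; apply H; lia|].
 destruct (H n ltac:(lia)) as [d2 [Hd2 H2]].
 exists (Rmin d1 d2); split; [apply Rmin_pos; auto|]. intros k Hk.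
 assert (0 < Rmin d1 d2) by (apply Rmin_pos; auto).
 destruct (Nat.eq_dec k n) as [->|Hkn].
 - apply (Hm n d2); auto. split; [auto|apply Rmin_r].
 - apply (Hm k d1); [auto|split; [auto|apply Rmin_l]|apply H1; lia].
Qed.

(** * A priori estimates for the solution *)

Section Solution.

Variables (n : nat) (Lam : nat -> R) (P : vec -> vec) (eps th : R) (v0 : vec) (a : R -> vec).
Hypothesis Hsol : is_solution n Lam P eps th v0 a.

Lemma solution_continuous t : - th <= t <= th -> forall e, 0 < e -> exists d, 0 < d /\
  forall t', - th <= t' <= th -> Rabs (t' - t) < d -> vnorm n (vsub (a t') (a t)) < e.
Proof.
 destruct Hsol as [_ Hd]. intros Ht e He.
 pose proof (pos_INR n).
 set (e' := e / (2 * INR n + 1)).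
 assert (He' : 0 < e') by (unfold e'; apply Rdiv_lt_0_compat; lra).
 destruct (common_delta n (fun k d => forall t', - th <= t' <= th -> Rabs (t' - t) < d ->
    Rabs (fst (a t' k) - fst (a t k)) < e' /\ Rabs (snd (a t' k) - snd (a t k)) < e'))
   as [d [Hd0 Hdk]].
 - intros k d d' Hk Hdd Hp t' H1 H2. apply Hp; auto. lra.
 - intros k Hk. destruct (Hd k Hk) as [D1 D2].
   destruct (deriv_within_cont _ _ _ _ D1 t Ht e' He') as [d1 [Hd1 C1]].
   destruct (deriv_within_cont _ _ _ _ D2 t Ht e' He') as [d2 [Hd2 C2]].
   exists (Rmin d1 d2); split; [apply Rmin_pos; auto|]. intros t' H1 H2.
   split; [apply C1|apply C2]; auto; eapply Rlt_le_trans; eauto; [apply Rmin_l|apply Rmin_r].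
 - exists d; split; auto. intros t' H1 H2.
   eapply Rle_lt_trans; [apply vnorm_le_sum_Rabs|].
   apply Rle_lt_trans with (sumR n (fun _ => 2 * e')).
   + apply sumR_le. intros k Hk. destruct (Hdk k Hk t' H1 H2). unfold vsub, csub; simpl. lra.
   + rewrite sumR_const. unfold e'.
     apply Rmult_lt_reg_r with (2 * INR n + 1); [lra|].
     replace (INR n * (2 * (e / (2 * INR n + 1))) * (2 * INR n + 1)) with (2 * INR n * e)
       by (field; lra).
     nra.
Qed.

(* Differentiate s |-> <a y - a x, a s>, whose increment from x to y is |a y - a x|^2. *)
Lemma solution_increment_le B : 0 <= B ->
  forall x y, - th <= x <= th -> - th <= y <= th ->
  (forall s, Rmin x y <= s <= Rmax x y -> vnorm n (yflow Lam P (s / eps) (a s)) <= B) ->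
  vnorm n (vsub (a y) (a x)) <= B * Rabs (y - x).
Proof.
 destruct Hsol as [_ Hd]. intros HB x y Hx Hy Hs.
 set (u := vsub (a y) (a x)).
 set (f := fun s => dotv n u (a s)).
 set (f' := fun s => dotv n u (yflow Lam P (s / eps) (a s))).
 assert (Hmm : - th <= Rmin x y /\ Rmax x y <= th)
   by (unfold Rmin, Rmax; destruct Rle_dec; lra).
 assert (Df : deriv_within f f' (Rmin x y) (Rmax x y)).
 { apply deriv_within_subinterval with (- th) th; try tauto.
   apply (deriv_within_sumR n (fun k s => fst (u k) * fst (a s k) + snd (u k) * snd (a s k))).
   intros k Hk. destruct (Hd k Hk).
   apply deriv_within_plus; apply deriv_within_scal; auto. }
 assert (Hf' : forall s, Rmin x y <= s <= Rmax x y -> Rabs (f' s) <= vnorm n u * B).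
 { intros s Hs'. eapply Rle_trans; [apply Rabs_dotv_le|].
   apply Rmult_le_compat_l; [apply vnorm_nonneg|apply Hs; auto]. }
 assert (Hfd : f y - f x = vnorm n u * vnorm n u).
 { rewrite vnorm_sqr, <- dotv_self. unfold f.
   replace (dotv n u (a y) - dotv n u (a x)) with (dotv n u (a y) + (-1) * dotv n u (a x)) by ring.
   unfold dotv. rewrite <- sumR_scal, <- sumR_plus.
   apply sumR_ext; intros k _. unfold u, vsub, csub; simpl. ring. }
 pose proof (deriv_within_lipschitz _ _ _ _ _ Df Hf' x y) as L.
 rewrite Hfd, Rabs_pos_eq in L by (pose proof (vnorm_nonneg n u); nra).
 specialize (L ltac:(unfold Rmin, Rmax; destruct Rle_dec; lra) ltac:(unfold Rmin, Rmax; destruct Rle_dec; lra)).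
 pose proof (vnorm_nonneg n u). pose proof (Rabs_pos (y - x)).
 destruct (Req_dec (vnorm n u) 0) as [E|E]; [rewrite E; nra|].
 apply Rmult_le_reg_l with (vnorm n u); [lra|]. nra.
Qed.

Lemma solution_vsub_v0 t : vnorm n (vsub (a t) v0) = vnorm n (vsub (a t) (a 0)).
Proof. destruct Hsol as [H _]. apply vnorm_ext; intros k Hk; unfold vsub; rewrite H; auto. Qed.

Variables (X : R -> R) (R0 : R).
Hypotheses (HL : Lip_X n X P) (HX : 0 < X (2 * R0)) (Hv0 : vnorm n v0 <= R0)
           (Hth0 : 0 <= th) (Hth : X (2 * R0) * th <= R0).

Section Direction.

Variable sg : R.
Hypothesis Hsg : Rabs sg = 1.

Let sg_cases : sg = 1 \/ sg = -1.
Proof. destruct (Rcase_abs sg); [rewrite Rabs_left in Hsg|rewrite Rabs_pos_eq in Hsg]; lra. Qed.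

Let sg_mul_range t : 0 <= t <= th -> - th <= sg * t <= th.
Proof. intros Ht. apply Rabs_le_between. rewrite Rabs_mult, Hsg, Rabs_pos_eq; lra. Qed.

Let Rabs_sg_mul_sub t t' : Rabs (sg * t' - sg * t) = Rabs (t' - t).
Proof. replace (sg * t' - sg * t) with (sg * (t' - t)) by ring. rewrite Rabs_mult, Hsg; ring. Qed.

Lemma solution_drift_le_of_in_ball t : 0 <= t <= th ->
  (forall w, 0 <= w <= t -> vnorm n (a (sg * w)) < 2 * R0) ->
  vnorm n (vsub (a (sg * t)) v0) <= X (2 * R0) * t.
Proof.
 intros Ht Hball. pose proof (vnorm_nonneg n v0).
 rewrite solution_vsub_v0.
 replace (X (2 * R0) * t) with (X (2 * R0) * Rabs (sg * t - 0))
   by (rewrite Rminus_0_r, Rabs_mult, Hsg, Rabs_pos_eq; lra).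
 apply solution_increment_le; [lra|split; lra|apply sg_mul_range; lra|].
 intros s Hs. apply (vnorm_yflow_le n Lam X P (2 * R0)); [auto|lra|].
 assert (Hw : exists w, 0 <= w <= t /\ s = sg * w).
 { destruct sg_cases as [E|E]; rewrite E in Hs |- *; unfold Rmin, Rmax in Hs; destruct Rle_dec in Hs;
     [exists s|exists s|exists (- s)|exists (- s)]; split; lra. }
 destruct Hw as [w [Hw ->]]. auto.
Qed.

(* While a stays in the ball of radius 2 R0 its speed is at most X (2 R0), and in time th
   this cannot carry it out of that ball. *)
Lemma solution_drift_le :
  forall t, 0 <= t <= th -> vnorm n (vsub (a (sg * t)) v0) <= X (2 * R0) * t.
Proof.
 pose proof (vnorm_nonneg n v0). set (X2 := X (2 * R0)) in *.
 assert (Hin : forall w, 0 <= w < th -> vnorm n (vsub (a (sg * w)) v0) <= X2 * w ->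
           vnorm n (a (sg * w)) < 2 * R0).
 { intros w Hw Hd. eapply Rle_lt_trans; [apply (vnorm_le_add_vsub n (a (sg * w)) v0)|].
   assert (X2 * w < X2 * th) by (apply Rmult_lt_compat_l; lra). lra. }
 apply continuous_induction; [lra| |intros s Hs IH|intros s Hs IH].
 - rewrite Rmult_0_r, Rmult_0_r, solution_vsub_v0, vnorm_vsub_self; lra.
 - pose proof (Hin s ltac:(lra) (IH s ltac:(lra))) as Hm.
   destruct (solution_continuous (sg * s) (sg_mul_range s ltac:(lra)) (2 * R0 - vnorm n (a (sg * s)))
               ltac:(lra)) as [d [Hd Hc]].
   exists d; split; auto. intros t Ht1 Ht2.
   apply solution_drift_le_of_in_ball; [lra|]. intros w Hw. destruct (Rle_dec w s).
   + apply Hin; [lra|apply IH; lra].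
   + assert (vnorm n (vsub (a (sg * w)) (a (sg * s))) < 2 * R0 - vnorm n (a (sg * s)))
       by (apply Hc; [apply sg_mul_range; lra|rewrite Rabs_sg_mul_sub, Rabs_pos_eq; lra]).
     pose proof (vnorm_le_add_vsub n (a (sg * w)) (a (sg * s))). lra.
 - replace (X2 * s) with (X2 * (s - 0)) by ring.
   apply (affine_bound_left_closure (fun t => vnorm n (vsub (a (sg * t)) v0))); [lra| |].
   + intros e He. destruct (solution_continuous (sg * s) (sg_mul_range s ltac:(lra)) e He) as [d [Hd Hc]].
     exists d; split; auto. intros t Ht Hst.
     specialize (Hc (sg * t) (sg_mul_range t ltac:(lra)) ltac:(rewrite Rabs_sg_mul_sub, Rabs_left; lra)).
     rewrite vnorm_vsub_sym in Hc.
     pose proof (vnorm_vsub_triangle n (a (sg * s)) (a (sg * t)) v0). lra.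
   + intros t Ht. rewrite Rminus_0_r. apply IH; lra.
Qed.

End Direction.

Lemma solution_in_ball t : Rabs t <= th -> vnorm n (a t) <= 2 * R0.
Proof.
 intros Ht.
 assert (E : exists sg, Rabs sg = 1 /\ t = sg * Rabs t).
 { destruct (Rcase_abs t).
   - exists (-1). split; [rewrite Rabs_left; lra|rewrite (Rabs_left t); lra].
   - exists 1; split; [apply Rabs_R1|rewrite Rabs_pos_eq; lra]. }
 destruct E as [sg [H1 H2]].
 pose proof (solution_drift_le sg H1 (Rabs t) ltac:(split; [apply Rabs_pos|auto])) as B.
 rewrite <- H2 in B. pose proof (vnorm_le_add_vsub n (a t) v0).
 assert (X (2 * R0) * Rabs t <= X (2 * R0) * th) by (apply Rmult_le_compat_l; lra).
 lra.
Qed.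

(* The open balls in [Lip_X] force the radius 2 R0 + 1 here. *)
Lemma solution_lipschitz x y : Rabs x <= th -> Rabs y <= th ->
  vnorm n (vsub (a y) (a x)) <= X (2 * R0 + 1) * Rabs (y - x).
Proof.
 intros Hx Hy. pose proof (vnorm_nonneg n v0).
 apply solution_increment_le; [apply (Lip_X_nonneg n X P); auto; lra| | |];
   try (apply Rabs_le_between; auto).
 intros s Hs. apply (vnorm_yflow_le n Lam X P); [auto|lra|].
 assert (vnorm n (a s) <= 2 * R0); [|lra].
 apply solution_in_ball. apply Rabs_le_between in Hx; apply Rabs_le_between in Hy. apply Rabs_le.
 unfold Rmin, Rmax in Hs; destruct Rle_dec in Hs; lra.
Qed.

End Solution.

(** * Riemann integrals *)

Lemma Defs_RInt_eq f lo hi : ex_RInt f lo hi -> Defs.RInt f lo hi = RInt f lo hi.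
Proof.
 intros H. unfold Defs.RInt.
 assert (E : exists r, exists pr : Riemann_integrable f lo hi, RiemannInt pr = r)
   by (exists (RiemannInt (ex_RInt_Reals_0 _ _ _ H)); exists (ex_RInt_Reals_0 _ _ _ H); auto).
 destruct (epsilon_spec (inhabits 0) _ E) as [pr Hpr]. rewrite <- Hpr.
 symmetry; apply RInt_Reals.
Qed.

Definition clamp (lo hi t : R) : R := Rmax lo (Rmin hi t).

Lemma clamp_in lo hi t : lo <= hi -> lo <= clamp lo hi t <= hi.
Proof. intros; unfold clamp, Rmax, Rmin; repeat destruct Rle_dec; lra. Qed.

Lemma clamp_id lo hi t : lo <= t <= hi -> clamp lo hi t = t.
Proof. intros; unfold clamp, Rmax, Rmin; repeat destruct Rle_dec; lra. Qed.

Lemma Rabs_clamp_sub_le lo hi t t' : lo <= hi ->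
  Rabs (clamp lo hi t' - clamp lo hi t) <= Rabs (t' - t).
Proof.
 intros; unfold clamp, Rmax, Rmin.
 pose proof (Rle_abs (t' - t)); pose proof (Rle_abs (- (t' - t))). rewrite Rabs_Ropp in *.
 repeat destruct Rle_dec; apply Rabs_le; split; lra.
Qed.

(* Extending f by constants outside [lo, hi] gives a continuous function on R. *)
Lemma ex_RInt_cont_within f lo hi x y : cont_within f lo hi ->
  lo <= x <= hi -> lo <= y <= hi -> ex_RInt f x y.
Proof.
 intros Hc Hx Hy.
 apply (ex_RInt_ext (fun t => f (clamp lo hi t))).
 { intros z Hz. rewrite clamp_id; auto. unfold Rmin, Rmax in Hz; destruct Rle_dec in Hz; lra. }
 apply (@ex_RInt_continuous R_CompleteNormedModule). intros z _. apply continuity_pt_filterlim.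
 intros e He. destruct (Hc (clamp lo hi z) (clamp_in lo hi z ltac:(lra)) e He) as [d [Hd Hh]].
 exists d; split; auto. intros z' [_ Hz']. unfold R_dist in *. simpl in *. unfold R_dist in *.
 apply Hh; [apply clamp_in; lra|]. eapply Rle_lt_trans; [apply Rabs_clamp_sub_le; lra|auto].
Qed.

Lemma ex_RInt_lipschitz f C lo hi x y : 0 <= C ->
  (forall t t', lo <= t <= hi -> lo <= t' <= hi -> Rabs (f t' - f t) <= C * Rabs (t' - t)) ->
  lo <= x <= hi -> lo <= y <= hi -> ex_RInt f x y.
Proof. intros HC Hf. apply ex_RInt_cont_within, (lipschitz_cont_within f C); auto. Qed.

Lemma RInt_Chasles_R (f : R -> R) a b c : ex_RInt f a b -> ex_RInt f b c ->
  RInt f a b + RInt f b c = RInt f a c.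
Proof. intros; rewrite <- (RInt_Chasles f a b c) by auto; reflexivity. Qed.

Lemma RInt_minus_R (f g : R -> R) a b : ex_RInt f a b -> ex_RInt g a b ->
  RInt (fun x => f x - g x) a b = RInt f a b - RInt g a b.
Proof. intros. apply (RInt_minus f g a b); auto. Qed.

Lemma ex_RInt_minus_R (f g : R -> R) a b : ex_RInt f a b -> ex_RInt g a b ->
  ex_RInt (fun x => f x - g x) a b.
Proof. intros. apply (ex_RInt_minus f g a b); auto. Qed.

Lemma RInt_const_R c a b : @RInt R_CompleteNormedModule (fun _ => c) a b = (b - a) * c.
Proof. rewrite RInt_const. reflexivity. Qed.

Lemma abs_RInt_le_const_Rabs (f : R -> R) a b M : ex_RInt f a b ->
  (forall t, Rmin a b <= t <= Rmax a b -> Rabs (f t) <= M) ->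
  Rabs (RInt f a b) <= M * Rabs (b - a).
Proof.
 intros He HM. destruct (Rle_dec a b).
 - rewrite (Rabs_pos_eq (b - a)) by lra. rewrite Rmult_comm. apply abs_RInt_le_const; auto.
   intros t Ht; apply HM. rewrite Rmin_left, Rmax_right; lra.
 - rewrite <- (opp_RInt_swap f b a) by (apply ex_RInt_swap; auto). unfold opp; simpl.
   rewrite Rabs_Ropp, (Rabs_left (b - a)) by lra. replace (- (b - a)) with (a - b) by ring.
   rewrite Rmult_comm. apply abs_RInt_le_const; [lra|apply ex_RInt_swap; auto|].
   intros t Ht; apply HM. rewrite Rmin_right, Rmax_left; lra.
Qed.

Lemma RInt_shift (f : R -> R) a b tau : ex_RInt f (a + tau) (b + tau) ->
  RInt (fun t => f (t + tau)) a b = RInt f (a + tau) (b + tau).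
Proof.
 intros H. pose proof (RInt_comp_lin f 1 tau a b) as E.
 replace (1 * a + tau) with (a + tau) in E by ring. replace (1 * b + tau) with (b + tau) in E by ring.
 rewrite <- E by auto. apply RInt_ext; intros.
 unfold scal; simpl; unfold mult; simpl. f_equal. ring_simplify. f_equal. ring.
Qed.

Lemma ex_RInt_shift (f : R -> R) a b tau : ex_RInt f (a + tau) (b + tau) ->
  ex_RInt (fun t => f (t + tau)) a b.
Proof.
 intros H. pose proof (ex_RInt_comp_lin f 1 tau a b) as E.
 replace (1 * a + tau) with (a + tau) in E by ring. replace (1 * b + tau) with (b + tau) in E by ring.
 specialize (E H). eapply ex_RInt_ext; [|exact E]. intros; unfold scal; simpl; unfold mult; simpl.
 ring_simplify. f_equal. ring.
Qed.

Lemma RInt_scale (f : R -> R) a b eps : 0 < eps -> ex_RInt f (a / eps) (b / eps) ->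
  RInt (fun s => f (s / eps)) a b = eps * RInt f (a / eps) (b / eps).
Proof.
 intros He H. pose proof (RInt_comp_lin f (/ eps) 0 a b) as E.
 replace (/ eps * a + 0) with (a / eps) in E by (field; lra).
 replace (/ eps * b + 0) with (b / eps) in E by (field; lra).
 specialize (E H). rewrite <- E.
 assert (Ex : ex_RInt (fun y => scal (/ eps) (f (/ eps * y + 0))) a b).
 { pose proof (ex_RInt_comp_lin f (/ eps) 0 a b) as E2.
   replace (/ eps * a + 0) with (a / eps) in E2 by (field; lra).
   replace (/ eps * b + 0) with (b / eps) in E2 by (field; lra). auto. }
 pose proof (RInt_scal (fun y => scal (/ eps) (f (/ eps * y + 0))) a b eps Ex) as E3.
 unfold scal in E3; simpl in E3; unfold mult in E3; simpl in E3.
 transitivity (RInt (fun y => eps * (/ eps * f (/ eps * y + 0))) a b).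
 - apply RInt_ext; intros. rewrite Rplus_0_r. replace (/ eps * x) with (x / eps) by (unfold Rdiv; ring).
   change (@eq R (f (x / eps)) (eps * (/ eps * f (x / eps)))). field. lra.
 - unfold scal; simpl; unfold mult; simpl. rewrite E3. reflexivity.
Qed.

Lemma ex_RInt_scale (f : R -> R) a b eps : 0 < eps -> ex_RInt f (a / eps) (b / eps) ->
  ex_RInt (fun s => f (s / eps)) a b.
Proof.
 intros He H. pose proof (ex_RInt_comp_lin f (/ eps) 0 a b) as E.
 replace (/ eps * a + 0) with (a / eps) in E by (field; lra).
 replace (/ eps * b + 0) with (b / eps) in E by (field; lra).
 apply (ex_RInt_scal _ _ _ eps) in E; auto.
 eapply ex_RInt_ext; [|exact E]. intros x _. unfold scal; simpl; unfold mult; simpl.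
 change (@eq R (eps * (/ eps * f (/ eps * x + 0))) (f (x / eps))).
 replace (/ eps * x + 0) with (x / eps) by (unfold Rdiv; ring). field; lra.
Qed.

(** * Means of almost periodic functions *)

Definition nat_part (x : R) : nat := Z.to_nat (Int_part x).

Lemma nat_part_spec x : 0 <= x -> INR (nat_part x) <= x < INR (nat_part x) + 1.
Proof.
 intros Hx. unfold nat_part. destruct (base_Int_part x) as [H1 H2].
 assert (Hz : (0 <= Int_part x)%Z).
 { destruct (Z_lt_le_dec (Int_part x) 0) as [l|l]; auto. exfalso.
   assert (Hl : (Int_part x <= -1)%Z) by lia. apply IZR_le in Hl. lra. }
 rewrite INR_IZR_INZ, Z2Nat.id by auto. lra.
Qed.

Lemma archimed_nat N x : exists j, (j >= N)%nat /\ x <= INR j + 1.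
Proof.
 pose proof (nat_part_spec (Rabs x) (Rabs_pos x)) as Hm. set (m := nat_part (Rabs x)) in Hm.
 exists (Nat.max N m). split; [lia|].
 assert (INR m <= INR (Nat.max N m)) by (apply le_INR; lia). pose proof (Rle_abs x). lra.
Qed.

(* Bohr's relative density of e-almost periods, with inclusion intervals of length 2 L. *)
Definition almost_periods_dense (g : R -> R) (e L : R) : Prop :=
  forall x, exists tau, Rabs (tau - x) <= L /\ forall t, Rabs (g (t + tau) - g t) <= e.

Lemma almost_periods_dense_nonneg g e L : almost_periods_dense g e L -> 0 <= e /\ 0 <= L.
Proof.
 intros H. destruct (H 0) as [tau [Ht He]]. specialize (He 0).
 pose proof (Rabs_pos (tau - 0)); pose proof (Rabs_pos (g (0 + tau) - g 0)). lra.
Qed.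

Definition mean_seq (g : R -> R) (j : nat) : R := RInt g 0 (INR j + 1) / (INR j + 1).

(* The convergence rate granted by each density of almost periods, uniform over the
   windows [x, x + T]; M is meant to bound |g|. *)
Definition is_uniform_mean (g : R -> R) (M c : R) : Prop :=
  forall e L, almost_periods_dense g e L -> forall x T, 0 < T ->
    Rabs (RInt g x (x + T) / T - c) <= 2 * e + 4 * M * L / T.

Section Mean.

Variables (g : R -> R) (M : R).
Hypotheses (Hgint : forall x y, ex_RInt g x y) (Hbnd : forall t, Rabs (g t) <= M).

Let M_nonneg : 0 <= M.
Proof. pose proof (Hbnd 0); pose proof (Rabs_pos (g 0)); lra. Qed.

Lemma RInt_window_shift e L x T : almost_periods_dense g e L -> 0 < T ->
  Rabs (RInt g x (x + T) - RInt g 0 T) <= e * T + 2 * M * L.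
Proof.
 intros Hap HT. destruct (Hap x) as [tau [Htau Hg]].
 rewrite <- (RInt_Chasles_R g x tau (x + T)) by auto.
 rewrite <- (RInt_Chasles_R g tau (tau + T) (x + T)) by auto.
 assert (E : RInt g tau (tau + T) = RInt (fun t => g (t + tau)) 0 T).
 { rewrite RInt_shift; [f_equal; ring|]. replace (0 + tau) with tau by ring.
   replace (T + tau) with (tau + T) by ring. auto. }
 rewrite E.
 assert (A1 : Rabs (RInt g x tau) <= M * Rabs (tau - x)) by (apply abs_RInt_le_const_Rabs; auto).
 assert (A2 : Rabs (RInt g (tau + T) (x + T)) <= M * Rabs ((x + T) - (tau + T)))
   by (apply abs_RInt_le_const_Rabs; auto).
 replace ((x + T) - (tau + T)) with (- (tau - x)) in A2 by ring. rewrite Rabs_Ropp in A2.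
 assert (A3 : Rabs (RInt (fun t => g (t + tau) - g t) 0 T) <= e * Rabs (T - 0)).
 { apply abs_RInt_le_const_Rabs; auto. apply ex_RInt_minus_R; auto. apply ex_RInt_shift; auto. }
 rewrite RInt_minus_R in A3 by (auto; apply ex_RInt_shift; auto).
 rewrite Rminus_0_r, (Rabs_pos_eq T) in A3 by lra.
 assert (M * Rabs (tau - x) <= M * L) by (apply Rmult_le_compat_l; auto).
 apply Rabs_le_between in A1; apply Rabs_le_between in A2; apply Rabs_le_between in A3.
 apply Rabs_le. lra.
Qed.

Lemma RInt_window_multiple e L T (m : nat) : almost_periods_dense g e L -> 0 < T ->
  Rabs (RInt g 0 (INR m * T) - INR m * RInt g 0 T) <= INR m * (e * T + 2 * M * L).
Proof.
 intros Hap HT. induction m.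
 - simpl. rewrite !Rmult_0_l, RInt_point. unfold zero; simpl. rewrite Rminus_0_r, Rabs_R0. lra.
 - rewrite S_INR, <- (RInt_Chasles_R g 0 (INR m * T) ((INR m + 1) * T)) by auto.
   replace ((INR m + 1) * T) with (INR m * T + T) by ring.
   pose proof (RInt_window_shift e L (INR m * T) T Hap HT) as H.
   apply Rabs_le_between in H; apply Rabs_le_between in IHm. apply Rabs_le. lra.
Qed.

Lemma mean_compare e L T S : almost_periods_dense g e L -> 0 < T -> T <= S ->
  Rabs (RInt g 0 S / S - RInt g 0 T / T) <= e + 2 * M * L / T + 2 * M * T / S.
Proof.
 intros Hap HT HS. destruct (almost_periods_dense_nonneg g e L Hap) as [He HL].
 destruct (nat_part_spec (S / T)) as [Hm1 Hm2]; [apply Rlt_le, Rdiv_lt_0_compat; lra|].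
 set (m := nat_part (S / T)) in *.
 assert (Hm1' : INR m * T <= S)
   by (apply Rmult_le_compat_r with (r := T) in Hm1; [|lra];
       replace (S / T * T) with S in Hm1 by (field; lra); lra).
 assert (Hm2' : S < INR m * T + T)
   by (apply Rmult_lt_compat_r with (r := T) in Hm2; [|lra];
       replace (S / T * T) with S in Hm2 by (field; lra); lra).
 pose proof (RInt_window_multiple e L T m Hap HT) as H2.
 rewrite <- (RInt_Chasles_R g 0 (INR m * T) S) by auto.
 assert (H3 : Rabs (RInt g (INR m * T) S) <= M * Rabs (S - INR m * T)) by (apply abs_RInt_le_const_Rabs; auto).
 rewrite (Rabs_pos_eq (S - INR m * T)) in H3 by lra.
 assert (H4 : Rabs (RInt g 0 T) <= M * Rabs (T - 0)) by (apply abs_RInt_le_const_Rabs; auto).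
 rewrite Rminus_0_r, (Rabs_pos_eq T) in H4 by lra.
 set (A := RInt g 0 (INR m * T)) in *. set (B := RInt g (INR m * T) S) in *. set (C := RInt g 0 T) in *.
 assert (K : Rabs ((A + B) - (S / T) * C) <= (S / T) * (e * T + 2 * M * L) + 2 * M * T).
 { assert (Rabs ((S / T - INR m) * C) <= 1 * (M * T)).
   { rewrite Rabs_mult. apply Rmult_le_compat; try apply Rabs_pos; auto. rewrite Rabs_pos_eq; lra. }
   assert (INR m * (e * T + 2 * M * L) <= (S / T) * (e * T + 2 * M * L)).
   { apply Rmult_le_compat_r; auto. pose proof M_nonneg. nra. }
   apply Rabs_le_between in H; apply Rabs_le_between in H2; apply Rabs_le_between in H3.
   assert ((S / T - INR m) * C = S / T * C - INR m * C) by ring.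
   apply Rabs_le. nra. }
 replace ((A + B) / S - C / T) with (((A + B) - (S / T) * C) / S) by (field; lra).
 unfold Rdiv at 1. rewrite Rabs_mult, Rabs_inv, (Rabs_pos_eq S) by lra.
 apply Rmult_le_reg_r with S; [lra|]. rewrite Rmult_assoc, Rinv_l, Rmult_1_r by lra.
 replace ((e + 2 * M * L / T + 2 * M * T / S) * S) with (S / T * (e * T + 2 * M * L) + 2 * M * T)
   by (field; lra).
 auto.
Qed.

Lemma mean_seq_near e L T eta : almost_periods_dense g e L -> 0 < T -> 0 < eta ->
  exists N, forall j, (j >= N)%nat -> Rabs (mean_seq g j - RInt g 0 T / T) <= e + 2 * M * L / T + eta.
Proof.
 intros Hap HT Heta. pose proof M_nonneg as HM.
 assert (Hq : 0 <= 2 * M * T / eta) by (apply Rmult_le_pos; [nra|apply Rlt_le, Rinv_0_lt_compat; lra]).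
 destruct (archimed_nat 0 (T + 2 * M * T / eta)) as [N [_ HN]]. exists N. intros j Hj.
 assert (INR N <= INR j) by (apply le_INR; lia).
 pose proof (pos_INR j).
 pose proof (mean_compare e L T (INR j + 1) Hap HT ltac:(lra)) as Hcmp.
 assert (2 * M * T / (INR j + 1) <= eta).
 { apply Rmult_le_reg_r with (INR j + 1); [lra|].
   replace (2 * M * T / (INR j + 1) * (INR j + 1)) with (2 * M * T) by (field; lra).
   assert (E : 2 * M * T = 2 * M * T / eta * eta) by (field; lra).
   assert (2 * M * T / eta * eta <= (INR j + 1) * eta) by (apply Rmult_le_compat_r; lra).
   lra. }
 unfold mean_seq. lra.
Qed.

Lemma mean_seq_cauchy : (forall e, 0 < e -> exists L, almost_periods_dense g e L) ->
  Cauchy_crit (mean_seq g).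
Proof.
 intros Hap eta Heta. destruct (Hap (eta / 8) ltac:(lra)) as [L HL].
 destruct (almost_periods_dense_nonneg _ _ _ HL) as [_ HL0]. pose proof M_nonneg.
 set (T := 1 + 16 * M * L / eta).
 assert (HTq : 0 <= 16 * M * L / eta) by (apply Rmult_le_pos; [nra|apply Rlt_le, Rinv_0_lt_compat; lra]).
 assert (HT : 0 < T) by (unfold T; lra).
 assert (K : 2 * M * L / T <= eta / 8).
 { apply Rmult_le_reg_r with T; auto. replace (2 * M * L / T * T) with (2 * M * L) by (field; lra).
   unfold T. replace (eta / 8 * (1 + 16 * M * L / eta)) with (eta / 8 + 2 * M * L) by (field; lra).
   lra. }
 destruct (mean_seq_near (eta / 8) L T (eta / 8) HL HT ltac:(lra)) as [N HN].
 exists N. intros j j' Hj Hj'. unfold R_dist.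
 pose proof (HN j Hj) as H1; pose proof (HN j' Hj') as H2.
 apply Rabs_le_between in H1; apply Rabs_le_between in H2. apply Rabs_lt_between. lra.
Qed.

Lemma mean_limit_rate e L c T : almost_periods_dense g e L -> Un_cv (mean_seq g) c -> 0 < T ->
  Rabs (RInt g 0 T / T - c) <= e + 2 * M * L / T.
Proof.
 intros Hap Hc HT. apply le_epsilon. intros eta Heta.
 destruct (Hc (eta / 2) ltac:(lra)) as [N1 HN1].
 destruct (mean_seq_near e L T (eta / 2) Hap HT ltac:(lra)) as [N2 HN2].
 specialize (HN1 (Nat.max N1 N2) ltac:(lia)). specialize (HN2 (Nat.max N1 N2) ltac:(lia)).
 unfold R_dist in HN1.
 apply Rabs_lt_between in HN1; apply Rabs_le_between in HN2. apply Rabs_le. lra.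
Qed.

Lemma mean_exists : (forall e, 0 < e -> exists L, almost_periods_dense g e L) ->
  exists c, is_uniform_mean g M c.
Proof.
 intros Hap. destruct (Rcomplete.R_complete _ (mean_seq_cauchy Hap)) as [c Hc].
 exists c. intros e L HL x T HT.
 pose proof (mean_limit_rate e L c T HL Hc HT) as H1.
 assert (H2 : Rabs (RInt g x (x + T) / T - RInt g 0 T / T) <= e + 2 * M * L / T).
 { replace (RInt g x (x + T) / T - RInt g 0 T / T) with ((RInt g x (x + T) - RInt g 0 T) / T)
     by (field; lra).
   unfold Rdiv. rewrite Rabs_mult, Rabs_inv, (Rabs_pos_eq T) by lra.
   apply Rmult_le_reg_r with T; auto. rewrite Rmult_assoc, Rinv_l, Rmult_1_r by lra.
   replace ((e + 2 * M * L * / T) * T) with (e * T + 2 * M * L) by (field; lra).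
   apply RInt_window_shift; auto. }
 replace (4 * M * L / T) with (2 * M * L / T + 2 * M * L / T) by (field; lra).
 apply Rabs_le_between in H1; apply Rabs_le_between in H2. apply Rabs_le. lra.
Qed.

Lemma uniform_mean_tendsto c : is_uniform_mean g M c ->
  (forall e, 0 < e -> exists L, almost_periods_dense g e L) ->
  forall eta, 0 < eta -> exists T1, 0 < T1 /\
    forall S, T1 < Rabs S -> Rabs (RInt g 0 S / S - c) < eta.
Proof.
 intros Hc Hap eta Heta. destruct (Hap (eta / 4) ltac:(lra)) as [L HL].
 destruct (almost_periods_dense_nonneg _ _ _ HL) as [_ HL0]. pose proof M_nonneg.
 set (T1 := 1 + 8 * M * L / eta).
 assert (HTq : 0 <= 8 * M * L / eta) by (apply Rmult_le_pos; [nra|apply Rlt_le, Rinv_0_lt_compat; lra]).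
 exists T1. split; [unfold T1; lra|]. intros S HS.
 assert (HS0 : 0 < Rabs S) by (unfold T1 in HS; lra).
 assert (K : 4 * M * L / Rabs S < eta / 2).
 { apply Rmult_lt_reg_r with (Rabs S); auto.
   replace (4 * M * L / Rabs S * Rabs S) with (4 * M * L) by (field; lra).
   apply Rle_lt_trans with (eta / 2 * T1); [|apply Rmult_lt_compat_l; lra].
   unfold T1. replace (eta / 2 * (1 + 8 * M * L / eta)) with (eta / 2 + 4 * M * L) by (field; lra).
   lra. }
 destruct (Rcase_abs S) as [Hn|Hp].
 - rewrite Rabs_left in HS0, K by lra.
   assert (E : RInt g 0 S / S = RInt g S (S + - S) / - S).
   { replace (S + - S) with 0 by ring. rewrite <- (opp_RInt_swap g S 0) by auto.
     unfold opp; simpl. field; lra. }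
   rewrite E. pose proof (Hc _ _ HL S (- S) HS0). lra.
 - rewrite Rabs_pos_eq in HS0, K by lra.
   pose proof (Hc _ _ HL 0 S HS0) as Hm. rewrite Rplus_0_l in Hm. lra.
Qed.

End Mean.

(** * Quasi-periodicity of [t |-> y^t(a)] *)

Lemma Rabs_sin_le x : Rabs (sin x) <= Rabs x.
Proof.
 assert (Hpos : forall y, 0 < y -> Rabs (sin y) <= y).
 { intros y Hy. pose proof (SIN_bound y). destruct (Rle_dec 1 y); [apply Rabs_le; lra|].
   pose proof PI2_1. assert (0 < sin y) by (apply sin_gt_0; pose proof PI2_Rlt_PI; lra).
   pose proof (sin_lt_x y Hy). rewrite Rabs_pos_eq; lra. }
 destruct (Rtotal_order x 0) as [H|[->|H]].
 - rewrite (Rabs_left x), <- (Ropp_involutive x), sin_neg, Rabs_Ropp, Ropp_involutive by lra.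
   apply Hpos; lra.
 - rewrite sin_0, Rabs_R0; lra.
 - rewrite (Rabs_pos_eq x) by lra. apply Hpos; lra.
Qed.

Lemma Rabs_half x : Rabs (x / 2) = Rabs x / 2.
Proof. unfold Rdiv. rewrite Rabs_mult, Rabs_inv, (Rabs_pos_eq 2) by lra. auto. Qed.

Lemma Rabs_cos_sub_le x y : Rabs (cos x - cos y) <= Rabs (x - y).
Proof.
 rewrite form2, !Rabs_mult, (Rabs_left (-2)) by lra.
 pose proof (Rabs_sin_le ((x - y) / 2)) as H. rewrite Rabs_half in H.
 assert (Rabs (sin ((x + y) / 2)) <= 1) by (apply Rabs_le, SIN_bound).
 pose proof (Rabs_pos (sin ((x - y) / 2))). pose proof (Rabs_pos (sin ((x + y) / 2))). nra.
Qed.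

Lemma Rabs_sin_sub_le x y : Rabs (sin x - sin y) <= Rabs (x - y).
Proof.
 rewrite form4, !Rabs_mult, (Rabs_pos_eq 2) by lra.
 pose proof (Rabs_sin_le ((x - y) / 2)) as H. rewrite Rabs_half in H.
 assert (Rabs (cos ((x + y) / 2)) <= 1) by (apply Rabs_le, COS_bound).
 pose proof (Rabs_pos (sin ((x - y) / 2))). pose proof (Rabs_pos (cos ((x + y) / 2))). nra.
Qed.

Definition rotations_close (n : nat) (w w' : nat -> R) (D : R) : Prop :=
  forall j, (j < n)%nat -> Rabs (cos (w j) - cos (w' j)) <= D /\ Rabs (sin (w j) - sin (w' j)) <= D.

Lemma rotations_close_opp n w w' D : rotations_close n w w' D ->
  rotations_close n (fun j => - w j) (fun j => - w' j) D.
Proof.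
 intros H j Hj. destruct (H j Hj). rewrite !cos_neg, !sin_neg.
 replace (- sin (w j) - - sin (w' j)) with (- (sin (w j) - sin (w' j))) by ring.
 rewrite Rabs_Ropp; auto.
Qed.

Lemma vnorm_vsub_Phi_le n w w' u D : 0 <= D -> rotations_close n w w' D ->
  vnorm n (vsub (Phi w u) (Phi w' u)) <= 2 * D * vnorm n u.
Proof.
 intros HD H. pose proof (vnorm_nonneg n u). apply sqrt_le_of_le_sqr; [nra|].
 replace (2 * D * vnorm n u * (2 * D * vnorm n u)) with ((4 * (D * D)) * (vnorm n u * vnorm n u))
   by ring.
 rewrite vnorm_sqr. unfold sqv. rewrite <- sumR_scal. apply sumR_le. intros j Hj.
 destruct (H j Hj) as [H1 H2]. unfold vsub, Phi, csub, cmul, cnorm2, expi; simpl.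
 set (c := cos (w j) - cos (w' j)) in *. set (s := sin (w j) - sin (w' j)) in *.
 set (u1 := fst (u j)). set (u2 := snd (u j)).
 match goal with |- ?l <= _ => replace l with ((c * c + s * s) * (u1 * u1 + u2 * u2)) by (unfold c, s; ring) end.
 assert (c * c <= D * D) by (apply Rabs_le_between in H1; nra).
 assert (s * s <= D * D) by (apply Rabs_le_between in H2; nra).
 assert (0 <= u1 * u1 + u2 * u2) by nra. nra.
Qed.

Lemma vnorm_yflow_sub_le n Lam X P r t t' a b D : Lip_X n X P -> 0 <= r ->
  vnorm n a < r -> vnorm n b < r -> 0 <= D ->
  rotations_close n (fun j => Lam j * t) (fun j => Lam j * t') D ->
  vnorm n (vsub (yflow Lam P t a) (yflow Lam P t' b)) <= 2 * D * X r * (1 + r) + X r * vnorm n (vsub a b).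
Proof.
 intros HL Hr Ha Hb HD Hcs.
 set (w := fun j => - (Lam j * t)). set (w' := fun j => - (Lam j * t')).
 set (u := Phi w a). set (u' := Phi w' b).
 assert (Hu : vnorm n u < r) by (unfold u; rewrite vnorm_Phi; auto).
 assert (Hu' : vnorm n u' < r) by (unfold u'; rewrite vnorm_Phi; auto).
 pose proof (Lip_X_nonneg n X P r HL ltac:(pose proof (vnorm_nonneg n a); lra)) as HXr.
 assert (Huu : vnorm n (vsub u u') <= vnorm n (vsub a b) + 2 * D * r).
 { eapply Rle_trans; [apply (vnorm_vsub_triangle n u (Phi w b) u')|].
   unfold u, u'. rewrite vnorm_vsub_Phi.
   pose proof (vnorm_vsub_Phi_le n w w' b D HD (rotations_close_opp _ _ _ _ Hcs)).
   assert (2 * D * vnorm n b <= 2 * D * r) by (apply Rmult_le_compat_l; lra). lra. }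
 unfold yflow. fold w w' u u'.
 eapply Rle_trans; [apply (vnorm_vsub_triangle n _ (Phi (fun j => Lam j * t') (P u)))|].
 rewrite vnorm_vsub_Phi.
 pose proof (vnorm_vsub_Phi_le n _ _ (P u) D HD Hcs).
 pose proof (vnorm_P_le n X P r u HL Hr Hu).
 pose proof (vnorm_P_sub_le n X P r u u' HL Hr Hu Hu').
 assert (2 * D * vnorm n (P u) <= 2 * D * X r) by (apply Rmult_le_compat_l; lra).
 assert (X r * vnorm n (vsub u u') <= X r * (vnorm n (vsub a b) + 2 * D * r))
   by (apply Rmult_le_compat_l; lra).
 nra.
Qed.

Lemma finite_range_representatives (V : Type) (F : R -> V) (vs : list V) :
  exists T0, 0 <= T0 /\ forall x, In (F x) vs -> exists t, Rabs t <= T0 /\ F t = F x.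
Proof.
 induction vs as [|v vs IH]; [exists 0; split; [lra|]; intros x []|].
 destruct IH as [T0 [HT0 IH]].
 destruct (classic (exists t, F t = v)) as [[t0 Ht0]|Hn].
 - exists (Rmax T0 (Rabs t0)). split; [eapply Rle_trans; [exact HT0|apply Rmax_l]|].
   intros x [Hx|Hx]; [exists t0; split; [apply Rmax_r|congruence]|].
   destruct (IH x Hx) as [t [Ht1 Ht2]]. exists t; split; auto.
   eapply Rle_trans; [exact Ht1|apply Rmax_l].
 - exists T0; split; auto. intros x [Hx|Hx]; auto. exfalso; apply Hn; exists x; auto.
Qed.

Fixpoint cell_lists (m Nb : nat) : list (list (nat * nat)) :=
  match m with
  | O => nil :: nil
  | S m' => flat_map (fun p => map (cons p) (cell_lists m' Nb))
                     (list_prod (seq 0 (S Nb)) (seq 0 (S Nb)))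
  end.

Lemma In_cell_lists Nb (l : list (nat * nat)) :
  (forall p, In p l -> (fst p <= Nb)%nat /\ (snd p <= Nb)%nat) -> In l (cell_lists (length l) Nb).
Proof.
 induction l as [|p l IH]; intros H; [simpl; auto|].
 cbn [length cell_lists]. apply in_flat_map. exists p. split.
 - destruct p as [p1 p2]. destruct (H (p1, p2) (or_introl eq_refl)) as [A B]; simpl in A, B.
   apply in_prod; apply in_seq; lia.
 - apply in_map, IH. intros q Hq; apply H; right; auto.
Qed.

Definition cell (h y : R) : nat := nat_part ((y + 1) / h).

Lemma cell_spec h y : 0 < h -> -1 <= y -> INR (cell h y) <= (y + 1) / h < INR (cell h y) + 1.
Proof. intros Hh Hy. apply nat_part_spec. apply Rdiv_le_0_compat; lra. Qed.

Lemma cell_le h y : 0 < h -> -1 <= y <= 1 -> (cell h y <= nat_part (2 / h))%nat.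
Proof.
 intros Hh Hy. destruct (cell_spec h y Hh ltac:(lra)).
 destruct (nat_part_spec (2 / h)) as [_ H2]; [apply Rdiv_le_0_compat; lra|].
 assert ((y + 1) / h <= 2 / h) by (apply Rmult_le_compat_r; [apply Rlt_le, Rinv_0_lt_compat|]; lra).
 assert (Hlt : INR (cell h y) < INR (S (nat_part (2 / h)))) by (rewrite S_INR; lra).
 apply INR_lt in Hlt. lia.
Qed.

Lemma cell_eq_close h y y' : 0 < h -> -1 <= y -> -1 <= y' -> cell h y = cell h y' -> Rabs (y - y') < h.
Proof.
 intros Hh Hy Hy' E. destruct (cell_spec h y Hh Hy). destruct (cell_spec h y' Hh Hy').
 rewrite E in *.
 assert (Hq : Rabs ((y - y') / h) < 1)
   by (replace ((y - y') / h) with ((y + 1) / h - (y' + 1) / h) by (field; lra); apply Rabs_def1; lra).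
 unfold Rdiv in Hq. rewrite Rabs_mult, Rabs_inv, (Rabs_pos_eq h) in Hq by lra.
 apply Rmult_lt_reg_r with (/ h); [apply Rinv_0_lt_compat; lra|]. rewrite Rinv_r by lra. auto.
Qed.

Lemma nth_map_seq {A : Type} (f : nat -> A) n j d : (j < n)%nat -> nth j (map f (seq 0 n)) d = f j.
Proof.
 intros H.
 rewrite nth_indep with (d' := f 0%nat), map_nth, seq_nth by (rewrite ?length_map, ?length_seq; auto).
 auto.
Qed.

(* Pigeonhole on the finitely many cells of the torus: one representative time per cell
   suffices, and subtracting the cell representative of -x from x gives a return time. *)
Lemma simultaneous_recurrence n (Lam : nat -> R) dl : 0 < dl ->
  exists L, 0 <= L /\ forall x, exists tau, Rabs (tau - x) <= L /\
    rotations_close n (fun j => Lam j * tau) (fun _ => 0) dl.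
Proof.
 intros Hdl. set (h := dl / 2). assert (Hh : 0 < h) by (unfold h; lra).
 set (cells := fun t => map (fun j => (cell h (cos (Lam j * t)), cell h (sin (Lam j * t)))) (seq 0 n)).
 destruct (finite_range_representatives _ cells (cell_lists n (nat_part (2 / h)))) as [T0 [HT0 HF]].
 exists T0. split; auto. intros x.
 destruct (HF (- x)) as [t [Ht Et]].
 { assert (Hlen : length (cells (- x)) = n) by (unfold cells; rewrite length_map, length_seq; auto).
   rewrite <- Hlen at 1. apply In_cell_lists. intros p Hp. unfold cells in Hp.
   apply in_map_iff in Hp. destruct Hp as [j [<- _]]; simpl.
   split; apply cell_le; auto; [apply COS_bound|apply SIN_bound]. }
 exists (t + x). split; [replace (t + x - x) with t by ring; auto|].
 intros j Hj. rewrite cos_0, sin_0.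
 assert (E := f_equal (fun l => nth j l (0%nat, 0%nat)) Et). unfold cells in E. simpl in E.
 rewrite !(nth_map_seq (fun j0 => (cell h (cos (Lam j0 * _)), cell h (sin (Lam j0 * _))))) in E by auto.
 injection E as E1 E2.
 apply cell_eq_close in E1; [|auto|apply COS_bound|apply COS_bound].
 apply cell_eq_close in E2; [|auto|apply SIN_bound|apply SIN_bound].
 replace (Lam j * - x) with (- (Lam j * x)) in E1, E2 by ring. rewrite cos_neg in E1. rewrite sin_neg in E2.
 replace (Lam j * (t + x)) with (Lam j * t + Lam j * x) by ring. rewrite cos_plus, sin_plus.
 set (A := Lam j * t) in *. set (B := Lam j * x) in *.
 pose proof (sin2_cos2 B) as H. unfold Rsqr in H. pose proof (COS_bound B). pose proof (SIN_bound B).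
 apply Rabs_lt_between in E1; apply Rabs_lt_between in E2.
 replace (cos A * cos B - sin A * sin B - 0 - 1)
   with ((cos A - cos B) * cos B - (sin A + sin B) * sin B) by nra.
 replace (sin A * cos B + cos A * sin B - 0)
   with ((sin A + sin B) * cos B + (cos A - cos B) * sin B) by ring.
 unfold h in *. split; apply Rabs_le; split; nra.
Qed.

Definition freq_bound (n : nat) (Lam : nat -> R) : R := sumR n (fun j => Rabs (Lam j)).

Lemma rotations_close_lin n Lam t t' :
  rotations_close n (fun j => Lam j * t) (fun j => Lam j * t') (freq_bound n Lam * Rabs (t - t')).
Proof.
 intros j Hj.
 assert (Rabs (Lam j) <= freq_bound n Lam)
   by (apply (sumR_term_le n (fun j => Rabs (Lam j))); auto; intros; apply Rabs_pos).
 assert (E : Rabs (Lam j * t - Lam j * t') <= freq_bound n Lam * Rabs (t - t')).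
 { replace (Lam j * t - Lam j * t') with (Lam j * (t - t')) by ring. rewrite Rabs_mult.
   apply Rmult_le_compat_r; auto; apply Rabs_pos. }
 split; eapply Rle_trans; [apply Rabs_cos_sub_le|exact E|apply Rabs_sin_sub_le|exact E].
Qed.

Lemma rotations_close_return n Lam tau t dl :
  rotations_close n (fun j => Lam j * tau) (fun _ => 0) dl ->
  rotations_close n (fun j => Lam j * (t + tau)) (fun j => Lam j * t) (2 * dl).
Proof.
 intros Hc j Hj. destruct (Hc j Hj) as [C1 C2]. rewrite cos_0 in C1. rewrite sin_0, Rminus_0_r in C2.
 replace (Lam j * (t + tau)) with (Lam j * t + Lam j * tau) by ring. rewrite cos_plus, sin_plus.
 pose proof (COS_bound (Lam j * t)). pose proof (SIN_bound (Lam j * t)).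
 apply Rabs_le_between in C1; apply Rabs_le_between in C2.
 split; apply Rabs_le; split; nra.
Qed.

Lemma Rabs_part_le_vnorm (pr : C -> R) n v k : pr = fst \/ pr = snd -> (k < n)%nat ->
  Rabs (pr (v k)) <= vnorm n v.
Proof. intros [->| ->] Hk; [apply Rabs_fst_le_vnorm|apply Rabs_snd_le_vnorm]; auto. Qed.

Lemma part_vsub (pr : C -> R) u v k : pr = fst \/ pr = snd -> pr (vsub u v k) = pr (u k) - pr (v k).
Proof. intros [->| ->]; reflexivity. Qed.

(* [pr] is always [fst] or [snd]: real and imaginary parts are treated at once. *)
Definition ypart (pr : C -> R) (Lam : nat -> R) (P : vec -> vec) (a : vec) (k : nat) (t : R) : R :=
  pr (yflow Lam P t a k).

Lemma is_average_unique n Lam P a v w k : is_average n Lam P a v -> is_average n Lam P a w ->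
  (k < n)%nat -> v k = w k.
Proof.
 intros Hv Hw Hk.
 assert (G : forall x y : R, (forall e, 0 < e -> Rabs (x - y) < 2 * e) -> x = y).
 { intros x y H. destruct (Req_dec x y); auto. exfalso.
   assert (0 < Rabs (x - y)) by (apply Rabs_pos_lt; lra).
   specialize (H (Rabs (x - y) / 4) ltac:(lra)). lra. }
 destruct (v k) as [v1 v2] eqn:Ev, (w k) as [w1 w2] eqn:Ew. f_equal; apply G; intros e He;
 destruct (Hv k Hk e He) as [M1 [HM1 H1]]; destruct (Hw k Hk e He) as [M2 [HM2 H2]];
 set (T := M1 + M2 + 1); assert (HT : Rabs T = T) by (apply Rabs_pos_eq; unfold T; lra);
 destruct (H1 T ltac:(rewrite HT; unfold T; lra)) as [A1 B1];
 destruct (H2 T ltac:(rewrite HT; unfold T; lra)) as [A2 B2];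
 rewrite ?Ev, ?Ew in *; simpl in A1, A2, B1, B2.
 - apply Rabs_lt_between in A1; apply Rabs_lt_between in A2. apply Rabs_def1; lra.
 - apply Rabs_lt_between in B1; apply Rabs_lt_between in B2. apply Rabs_def1; lra.
Qed.

Section Components.

Variables (n : nat) (Lam : nat -> R) (X : R -> R) (P : vec -> vec) (r : R).
Hypotheses (HL : Lip_X n X P) (Hr : 0 < r).

Let Xr_nonneg : 0 <= X r.
Proof. apply (Lip_X_nonneg n X P r HL Hr). Qed.

Lemma ypart_bound pr a k t : pr = fst \/ pr = snd -> vnorm n a < r -> (k < n)%nat ->
  Rabs (ypart pr Lam P a k t) <= X r.
Proof.
 intros Hpr Ha Hk. eapply Rle_trans; [apply (Rabs_part_le_vnorm pr n); auto|].
 apply (vnorm_yflow_le n Lam X P r); auto; lra.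
Qed.

Lemma ypart_sub_le pr a b k t t' : pr = fst \/ pr = snd -> vnorm n a < r -> vnorm n b < r ->
  (k < n)%nat ->
  Rabs (ypart pr Lam P a k t - ypart pr Lam P b k t')
    <= 2 * freq_bound n Lam * X r * (1 + r) * Rabs (t - t') + X r * vnorm n (vsub a b).
Proof.
 intros Hpr Ha Hb Hk. unfold ypart. rewrite <- part_vsub by auto.
 eapply Rle_trans; [apply (Rabs_part_le_vnorm pr n); auto|].
 assert (0 <= freq_bound n Lam * Rabs (t - t'))
   by (apply Rmult_le_pos; [apply sumR_nonneg; intros; apply Rabs_pos|apply Rabs_pos]).
 eapply Rle_trans;
   [apply (vnorm_yflow_sub_le n Lam X P r t t' a b (freq_bound n Lam * Rabs (t - t'))); auto; try lra;
    apply rotations_close_lin|].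
 right; ring.
Qed.

Lemma ypart_lipschitz pr a k t t' : pr = fst \/ pr = snd -> vnorm n a < r -> (k < n)%nat ->
  Rabs (ypart pr Lam P a k t' - ypart pr Lam P a k t)
    <= 2 * freq_bound n Lam * X r * (1 + r) * Rabs (t' - t).
Proof.
 intros Hpr Ha Hk. pose proof (ypart_sub_le pr a a k t' t Hpr Ha Ha Hk) as H.
 rewrite vnorm_vsub_self, Rmult_0_r, Rplus_0_r in H. auto.
Qed.

Lemma ex_RInt_ypart pr a k x y : pr = fst \/ pr = snd -> vnorm n a < r -> (k < n)%nat ->
  ex_RInt (ypart pr Lam P a k) x y.
Proof.
 intros Hpr Ha Hk.
 apply (ex_RInt_lipschitz _ (2 * freq_bound n Lam * X r * (1 + r)) (Rmin x y) (Rmax x y));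
   [|intros; apply ypart_lipschitz; auto|split; [apply Rmin_l|apply Rmax_l]|split; [apply Rmin_r|apply Rmax_r]].
 pose proof (sumR_nonneg n (fun j => Rabs (Lam j)) ltac:(intros; apply Rabs_pos)).
 unfold freq_bound. apply Rmult_le_pos; [|lra]. apply Rmult_le_pos; lra.
Qed.

Lemma ypart_almost_periodic e : 0 < e -> exists L, 0 <= L /\ forall pr a k, pr = fst \/ pr = snd ->
  vnorm n a < r -> (k < n)%nat -> almost_periods_dense (ypart pr Lam P a k) e L.
Proof.
 intros He. pose proof Xr_nonneg.
 set (dl := e / (4 * X r * (1 + r) + 1)).
 assert (Hq : 0 < 4 * X r * (1 + r) + 1) by nra.
 assert (Hdl : 0 < dl) by (unfold dl; apply Rdiv_lt_0_compat; lra).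
 assert (Hdle : 2 * (2 * dl) * X r * (1 + r) <= e).
 { apply Rle_trans with (e / (4 * X r * (1 + r) + 1) * (4 * X r * (1 + r) + 1)); [|right; field; lra].
   unfold dl. apply Rle_trans with (e / (4 * X r * (1 + r) + 1) * (4 * X r * (1 + r))); [right; ring|].
   apply Rmult_le_compat_l; [apply Rlt_le, Rdiv_lt_0_compat|]; lra. }
 destruct (simultaneous_recurrence n Lam dl Hdl) as [L [HL0 HD]]. exists L. split; auto.
 intros pr a k Hpr Ha Hk x. destruct (HD x) as [tau [Ht Hc]]. exists tau. split; auto. intros t.
 unfold ypart. rewrite <- part_vsub by auto.
 eapply Rle_trans; [apply (Rabs_part_le_vnorm pr n); auto|].
 eapply Rle_trans; [apply (vnorm_yflow_sub_le n Lam X P r _ _ a a (2 * dl)); auto; try lra|].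
 - apply rotations_close_return; auto.
 - rewrite vnorm_vsub_self. lra.
Qed.

Lemma ypart_uniform_mean_exists pr a k : pr = fst \/ pr = snd -> vnorm n a < r -> (k < n)%nat ->
  exists c, is_uniform_mean (ypart pr Lam P a k) (X r) c.
Proof.
 intros Hpr Ha Hk. apply mean_exists.
 - intros; apply ex_RInt_ypart; auto.
 - intros; apply ypart_bound; auto.
 - intros e He. destruct (ypart_almost_periodic e He) as [L [_ HAP]]. exists L; auto.
Qed.

(* In particular the limit defining <<P>>(a) exists. *)
Lemma avgP_uniform_mean pr a k : pr = fst \/ pr = snd -> vnorm n a < r -> (k < n)%nat ->
  is_uniform_mean (ypart pr Lam P a k) (X r) (pr (avgP n Lam P a k)).
Proof.
 intros Hpr Ha Hk.
 set (c := fun pr k => epsilon (inhabits 0) (is_uniform_mean (ypart pr Lam P a k) (X r))).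
 assert (Hc : forall pr k, pr = fst \/ pr = snd -> (k < n)%nat ->
                is_uniform_mean (ypart pr Lam P a k) (X r) (c pr k))
   by (intros; apply epsilon_spec, ypart_uniform_mean_exists; auto).
 set (v := fun k => (c fst k, c snd k)).
 assert (Hv : is_average n Lam P a v).
 { intros j Hj e He.
   assert (Hap : forall pr, pr = fst \/ pr = snd ->
             forall e, 0 < e -> exists L, almost_periods_dense (ypart pr Lam P a j) e L).
   { intros pr' Hpr' e' He'. destruct (ypart_almost_periodic e' He') as [L [_ HAP]]. eauto. }
   assert (Hlim : forall pr, pr = fst \/ pr = snd -> exists T1, 0 < T1 /\
             forall S, T1 < Rabs S -> Rabs (RInt (ypart pr Lam P a j) 0 S / S - c pr j) < e).
   { intros pr' Hpr'. apply (uniform_mean_tendsto _ (X r)); auto.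
     - intros; apply ex_RInt_ypart; auto.
     - intros; apply ypart_bound; auto. }
   destruct (Hlim fst ltac:(auto)) as [T1 [HT1 K1]]. destruct (Hlim snd ltac:(auto)) as [T2 [HT2 K2]].
   exists (T1 + T2). split; [lra|]. intros T HT I. unfold I, vint, v. cbn [fst snd].
   change (fun s => fst (yflow Lam P s a j)) with (ypart fst Lam P a j).
   change (fun s => snd (yflow Lam P s a j)) with (ypart snd Lam P a j).
   rewrite !Defs_RInt_eq by (apply ex_RInt_ypart; auto).
   split; [apply K1|apply K2]; lra. }
 assert (HA : is_average n Lam P a (avgP n Lam P a))
   by (unfold avgP; apply epsilon_spec; exists v; auto).
 rewrite (is_average_unique n Lam P a _ _ k HA Hv Hk).
 destruct Hpr as [->| ->]; apply Hc; auto.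
Qed.

Lemma avgP_lipschitz pr a b k : pr = fst \/ pr = snd -> vnorm n a < r -> vnorm n b < r ->
  (k < n)%nat ->
  Rabs (pr (avgP n Lam P a k) - pr (avgP n Lam P b k)) <= X r * vnorm n (vsub a b).
Proof.
 intros Hpr Ha Hb Hk. pose proof Xr_nonneg.
 apply le_epsilon. intros ee Hee.
 destruct (ypart_almost_periodic (ee / 8) ltac:(lra)) as [L [HL0 HAP]].
 set (T := 1 + 16 * X r * L / ee).
 assert (Hq : 0 <= 16 * X r * L / ee) by (apply Rmult_le_pos; [nra|apply Rlt_le, Rinv_0_lt_compat; lra]).
 assert (HT : 0 < T) by (unfold T; lra).
 assert (K : 2 * (ee / 8) + 4 * X r * L / T <= ee / 2).
 { assert (4 * X r * L / T <= ee / 4); [|lra].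
   apply Rmult_le_reg_r with T; auto. replace (4 * X r * L / T * T) with (4 * X r * L) by (field; lra).
   unfold T. replace (ee / 4 * (1 + 16 * X r * L / ee)) with (ee / 4 + 4 * X r * L) by (field; lra). lra. }
 pose proof (avgP_uniform_mean pr a k Hpr Ha Hk _ _ (HAP pr a k Hpr Ha Hk) 0 T HT) as A.
 pose proof (avgP_uniform_mean pr b k Hpr Hb Hk _ _ (HAP pr b k Hpr Hb Hk) 0 T HT) as B.
 rewrite Rplus_0_l in A, B.
 assert (I : Rabs (RInt (ypart pr Lam P a k) 0 T / T - RInt (ypart pr Lam P b k) 0 T / T)
               <= X r * vnorm n (vsub a b)).
 { replace (RInt (ypart pr Lam P a k) 0 T / T - RInt (ypart pr Lam P b k) 0 T / T)
     with (RInt (fun t => ypart pr Lam P a k t - ypart pr Lam P b k t) 0 T / T)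
     by (rewrite RInt_minus_R by (apply ex_RInt_ypart; auto); field; lra).
   unfold Rdiv. rewrite Rabs_mult, Rabs_inv, (Rabs_pos_eq T) by lra.
   apply Rmult_le_reg_r with T; auto. rewrite Rmult_assoc, Rinv_l, Rmult_1_r by lra.
   rewrite <- (Rminus_0_r T) at 2. rewrite <- (Rabs_pos_eq (T - 0)) by lra.
   apply abs_RInt_le_const_Rabs; [apply ex_RInt_minus_R; apply ex_RInt_ypart; auto|].
   intros t _. pose proof (ypart_sub_le pr a b k t t Hpr Ha Hb Hk) as Hab.
   rewrite Rminus_eq_0, Rabs_R0, Rmult_0_r, Rplus_0_l in Hab. auto. }
 apply Rabs_le_between in A; apply Rabs_le_between in B; apply Rabs_le_between in I.
 apply Rabs_le. lra.
Qed.

End Components.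

(** * The averaging estimate *)

(* On a piece of length h the integrand G is within A h of its frozen version Ga, whose
   integral is within Bq of h times the mean ca, itself within A h of the average C. *)
Lemma Rabs_RInt_piece_le (G Ga C : R -> R) al h ca A Bq : 0 <= h -> 0 <= A ->
  ex_RInt G al (al + h) -> ex_RInt Ga al (al + h) -> ex_RInt C al (al + h) ->
  (forall s, al <= s <= al + h -> Rabs (G s - Ga s) <= A * h) ->
  (forall s, al <= s <= al + h -> Rabs (C s - ca) <= A * h) ->
  Rabs (RInt Ga al (al + h) - h * ca) <= Bq ->
  Rabs (RInt (fun s => G s - C s) al (al + h)) <= 2 * A * h * h + Bq.
Proof.
 intros Hh HA EG EGa EC H1 H2 H3. rewrite (RInt_minus_R G C) by auto.
 assert (Hmm : Rmin al (al + h) = al /\ Rmax al (al + h) = al + h)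
   by (split; [apply Rmin_left|apply Rmax_right]; lra).
 assert (B1 : Rabs (RInt (fun s => G s - Ga s) al (al + h)) <= A * h * Rabs (al + h - al)).
 { apply abs_RInt_le_const_Rabs; [apply ex_RInt_minus_R; auto|].
   intros s Hs; apply H1. destruct Hmm as [E1 E2]. rewrite E1, E2 in Hs. auto. }
 assert (B2 : Rabs (RInt (fun s => C s - ca) al (al + h)) <= A * h * Rabs (al + h - al)).
 { apply abs_RInt_le_const_Rabs; [apply ex_RInt_minus_R; auto; apply ex_RInt_const|].
   intros s Hs; apply H2. destruct Hmm as [E1 E2]. rewrite E1, E2 in Hs. auto. }
 rewrite (RInt_minus_R G Ga) in B1 by auto.
 rewrite (RInt_minus_R C (fun _ => ca)), RInt_const_R in B2 by (auto; apply ex_RInt_const).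
 replace (al + h - al) with h in B1, B2 by ring. rewrite (Rabs_pos_eq h) in B1, B2 by lra.
 apply Rabs_le_between in B1; apply Rabs_le_between in B2; apply Rabs_le_between in H3.
 apply Rabs_le. lra.
Qed.

(* Substituting s = eps t turns a piece of length h into a window of length h / eps. *)
Lemma Rabs_RInt_rescaled_le (f : R -> R) eps al h c Q1 Q2 : (forall x y, ex_RInt f x y) ->
  0 < eps -> 0 <= h -> 0 <= Q1 -> 0 <= Q2 ->
  (forall x T, 0 < T -> Rabs (RInt f x (x + T) / T - c) <= Q1 + Q2 / T) ->
  Rabs (@RInt R_CompleteNormedModule (fun s => f (s / eps)) al (al + h) - h * c) <= h * Q1 + eps * Q2.
Proof.
 intros Hf He Hh HQ1 HQ2 HR. destruct (Req_dec h 0) as [->|E].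
 - rewrite Rplus_0_r, RInt_point. unfold zero; simpl. rewrite Rmult_0_l, Rminus_0_r, Rabs_R0. nra.
 - rewrite (RInt_scale f al (al + h) eps) by auto.
   set (T := h / eps). assert (HT : 0 < T) by (unfold T; apply Rdiv_lt_0_compat; lra).
   replace ((al + h) / eps) with (al / eps + T) by (unfold T; field; lra).
   specialize (HR (al / eps) T HT).
   replace (eps * RInt f (al / eps) (al / eps + T) - h * c)
     with (h * (RInt f (al / eps) (al / eps + T) / T - c)) by (unfold T; field; lra).
   rewrite Rabs_mult, (Rabs_pos_eq h) by lra.
   eapply Rle_trans; [apply Rmult_le_compat_l; [lra|exact HR]|].
   right. unfold T. field. lra.
Qed.

Lemma Rabs_RInt_le_pieces (F : R -> R) lo hi (N : nat) Q : lo <= hi -> (0 < N)%nat ->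
  (forall x y, lo <= x <= hi -> lo <= y <= hi -> ex_RInt F x y) ->
  (forall al, lo <= al -> al + (hi - lo) / INR N <= hi -> Rabs (RInt F al (al + (hi - lo) / INR N)) <= Q) ->
  Rabs (RInt F lo hi) <= INR N * Q.
Proof.
 intros Hlh HN Hi HQ. set (h := (hi - lo) / INR N) in *.
 assert (HNr : 0 < INR N) by (apply lt_0_INR; lia).
 assert (Hh : 0 <= h) by (unfold h; apply Rmult_le_pos; [lra|apply Rlt_le, Rinv_0_lt_compat; lra]).
 assert (HNh : INR N * h = hi - lo) by (unfold h; field; lra).
 assert (K : forall m, (m <= N)%nat -> Rabs (RInt F lo (lo + INR m * h)) <= INR m * Q).
 { induction m; intros Hm.
   - simpl. rewrite Rmult_0_l, Rplus_0_r, RInt_point. unfold zero; simpl. rewrite Rabs_R0; lra.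
   - assert (Hm' : INR (S m) <= INR N) by (apply le_INR; auto). rewrite S_INR in Hm' |- *.
     pose proof (pos_INR m).
     rewrite <- (RInt_Chasles_R F lo (lo + INR m * h) (lo + (INR m + 1) * h)) by (apply Hi; nra).
     specialize (IHm ltac:(lia)).
     pose proof (HQ (lo + INR m * h) ltac:(nra) ltac:(nra)) as B.
     replace (lo + INR m * h + h) with (lo + (INR m + 1) * h) in B by ring.
     eapply Rle_trans; [apply Rabs_triang|]. lra. }
 specialize (K N (le_n N)). rewrite HNh in K. replace (lo + (hi - lo)) with hi in K by ring. auto.
Qed.

Lemma ex_RInt_lipschitz_sym f K th x y : 0 <= K ->
  (forall s s', Rabs s <= th -> Rabs s' <= th -> Rabs (f s' - f s) <= K * Rabs (s' - s)) ->
  - th <= x <= th -> - th <= y <= th -> ex_RInt f x y.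
Proof.
 intros HK Hf. apply (ex_RInt_lipschitz f K); auto.
 intros t t' H1 H2. apply Hf; apply Rabs_le; lra.
Qed.

Lemma Rabs_RInt_sorted (F : R -> R) tau : ex_RInt F 0 tau ->
  Rabs (RInt F 0 tau) = Rabs (RInt F (Rmin 0 tau) (Rmax 0 tau)).
Proof.
 intros H. unfold Rmin, Rmax. destruct Rle_dec; auto.
 rewrite <- (opp_RInt_swap F tau 0) by (apply ex_RInt_swap; auto). unfold opp; simpl.
 rewrite Rabs_Ropp; auto.
Qed.

(* Cut [0, tau] into N pieces and freeze the slow variable on each: the freezing costs
   O(th^2 / N), the fast average on each piece costs O(Q1 th + N eps Q2). *)
Lemma averaging_estimate (Y Cf : R -> R) (g : R -> R -> R) th eps A K Q1 Q2 (N : nat) tau :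
  0 < eps -> 0 <= A -> 0 <= K -> 0 <= Q1 -> 0 <= Q2 -> (0 < N)%nat -> Rabs tau <= th ->
  (forall s s', Rabs s <= th -> Rabs s' <= th -> Rabs (Y s' - Y s) <= K * Rabs (s' - s)) ->
  (forall s s', Rabs s <= th -> Rabs s' <= th -> Rabs (Cf s' - Cf s) <= A * Rabs (s' - s)) ->
  (forall al s, Rabs al <= th -> Rabs s <= th -> Rabs (Y s - g al (s / eps)) <= A * Rabs (s - al)) ->
  (forall al x y, Rabs al <= th -> ex_RInt (g al) x y) ->
  (forall al, Rabs al <= th -> forall x T, 0 < T ->
     Rabs (RInt (g al) x (x + T) / T - Cf al) <= Q1 + Q2 / T) ->
  Rabs (RInt (fun s => Y s - Cf s) 0 tau) <= 2 * A * th * th / INR N + Q1 * th + INR N * eps * Q2.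
Proof.
 intros He HA HK HQ1 HQ2 HN Ht HY HC HG Hg HR.
 assert (Hth : 0 <= th) by (pose proof (Rabs_pos tau); lra).
 apply Rabs_le_between in Ht as Ht'.
 assert (EY := ex_RInt_lipschitz_sym Y K th). assert (EC := ex_RInt_lipschitz_sym Cf A th).
 assert (EF : forall x y, -th <= x <= th -> -th <= y <= th -> ex_RInt (fun s => Y s - Cf s) x y)
   by (intros; apply ex_RInt_minus_R; auto).
 set (lo := Rmin 0 tau). set (hi := Rmax 0 tau).
 assert (Hlo : lo <= hi /\ - th <= lo /\ hi <= th /\ hi - lo = Rabs tau).
 { unfold lo, hi, Rmin, Rmax. destruct Rle_dec; [rewrite Rabs_pos_eq|rewrite Rabs_left]; lra. }
 destruct Hlo as [H1 [H2 [H3 H4]]].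
 rewrite Rabs_RInt_sorted by (apply EF; lra). fold lo hi.
 set (h := (hi - lo) / INR N).
 assert (HNr : 0 < INR N) by (apply lt_0_INR; lia).
 assert (Hh : 0 <= h) by (unfold h; apply Rmult_le_pos; [lra|apply Rlt_le, Rinv_0_lt_compat; lra]).
 eapply Rle_trans.
 { apply (Rabs_RInt_le_pieces _ lo hi N (2 * A * h * h + (h * Q1 + eps * Q2))); auto.
   - intros x y Hx Hy; apply EF; lra.
   - intros al Hal1 Hal2. fold h in Hal2 |- *.
     assert (Hal : Rabs al <= th) by (apply Rabs_le; lra).
     assert (Hs : forall s, al <= s <= al + h -> Rabs s <= th /\ A * Rabs (s - al) <= A * h)
       by (intros s Hs; split; [apply Rabs_le; lra|apply Rmult_le_compat_l; [|rewrite Rabs_pos_eq]; lra]).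
     apply (Rabs_RInt_piece_le Y (fun s => g al (s / eps)) Cf al h (Cf al) A); auto.
     + apply EY; auto; lra.
     + apply ex_RInt_scale; auto.
     + apply EC; auto; lra.
     + intros s Hs'. destruct (Hs s Hs'). eapply Rle_trans; [apply HG|]; auto.
     + intros s Hs'. destruct (Hs s Hs'). eapply Rle_trans; [apply HC|]; auto.
     + apply (Rabs_RInt_rescaled_le (g al)); auto. }
 unfold h. rewrite H4.
 replace (INR N * (2 * A * (Rabs tau / INR N) * (Rabs tau / INR N) + (Rabs tau / INR N * Q1 + eps * Q2)))
   with (2 * A * (Rabs tau * Rabs tau) / INR N + Q1 * Rabs tau + INR N * eps * Q2) by (field; lra).
 pose proof (Rabs_pos tau).
 assert (2 * A * (Rabs tau * Rabs tau) / INR N <= 2 * A * th * th / INR N).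
 { unfold Rdiv. apply Rmult_le_compat_r; [apply Rlt_le, Rinv_0_lt_compat; lra|].
   rewrite !Rmult_assoc. apply Rmult_le_compat_l; [lra|]. apply Rmult_le_compat_l; [lra|].
   apply Rmult_le_compat; lra. }
 assert (Q1 * Rabs tau <= Q1 * th) by (apply Rmult_le_compat_l; lra).
 lra.
Qed.

(** * The uniform estimate of I *)

Section Estimate.

Variables (n : nat) (Lam : nat -> R) (X : R -> R) (P : vec -> vec) (R0 eps : R).
Variables (v0 : vec) (a : R -> vec).
Hypotheses (HL : Lip_X n X P) (HR : 0 < R0) (HX : 0 < X (2 * R0)) (Hv0 : vnorm n v0 <= R0)
           (Heps : 0 < eps) (Hsol : is_solution n Lam P eps (R0 / X (2 * R0)) v0 a).

Let th := R0 / X (2 * R0).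
Let r := 2 * R0 + 1.

Let r_pos : 0 < r.
Proof. unfold r; lra. Qed.

Let th_nonneg : 0 <= th.
Proof. unfold th. apply Rlt_le, Rdiv_lt_0_compat; lra. Qed.

Let solution_in_r_ball s : Rabs s <= th -> vnorm n (a s) < r.
Proof.
 intros Hs. unfold r.
 pose proof (solution_in_ball n Lam P eps th v0 a Hsol X R0 HL HX Hv0 th_nonneg
               ltac:(unfold th; right; field; lra) s Hs).
 lra.
Qed.

Let solution_lipschitz_th x y : Rabs x <= th -> Rabs y <= th ->
  vnorm n (vsub (a y) (a x)) <= X r * Rabs (y - x).
Proof.
 intros. apply (solution_lipschitz n Lam P eps th v0 a Hsol X R0); auto.
 unfold th; right; field; lra.
Qed.

Let Xr_nonneg : 0 <= X r.
Proof. apply (Lip_X_nonneg n X P r HL r_pos). Qed.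

Let integrand pr k s := ypart pr Lam P (a s) k (s / eps).
Let frozen_integrand pr k al t := ypart pr Lam P (a al) k t.

Lemma integrand_lipschitz pr k s s' : pr = fst \/ pr = snd -> (k < n)%nat ->
  Rabs s <= th -> Rabs s' <= th ->
  Rabs (integrand pr k s' - integrand pr k s)
    <= (2 * freq_bound n Lam * X r * (1 + r) / eps + X r * X r) * Rabs (s' - s).
Proof.
 intros Hpr Hk Hs Hs'. unfold integrand.
 eapply Rle_trans; [apply (ypart_sub_le n Lam X P r); auto|].
 assert (E : Rabs (s' / eps - s / eps) = Rabs (s' - s) / eps).
 { replace (s' / eps - s / eps) with ((s' - s) / eps) by (field; lra).
   unfold Rdiv; rewrite Rabs_mult, Rabs_inv, (Rabs_pos_eq eps) by lra; auto. }
 rewrite E. pose proof (solution_lipschitz_th s s' Hs Hs').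
 assert (X r * vnorm n (vsub (a s') (a s)) <= X r * (X r * Rabs (s' - s)))
   by (apply Rmult_le_compat_l; auto).
 assert ((2 * freq_bound n Lam * X r * (1 + r) / eps + X r * X r) * Rabs (s' - s)
         = 2 * freq_bound n Lam * X r * (1 + r) * (Rabs (s' - s) / eps) + X r * (X r * Rabs (s' - s)))
   by (field; lra).
 lra.
Qed.

Lemma avgP_solution_lipschitz pr k s s' : pr = fst \/ pr = snd -> (k < n)%nat ->
  Rabs s <= th -> Rabs s' <= th ->
  Rabs (pr (avgP n Lam P (a s') k) - pr (avgP n Lam P (a s) k)) <= X r * X r * Rabs (s' - s).
Proof.
 intros Hpr Hk Hs Hs'. eapply Rle_trans; [apply (avgP_lipschitz n Lam X P r); auto|].
 rewrite Rmult_assoc. apply Rmult_le_compat_l; auto.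
Qed.

Lemma integrand_sub_frozen_le pr k al s : pr = fst \/ pr = snd -> (k < n)%nat ->
  Rabs al <= th -> Rabs s <= th ->
  Rabs (integrand pr k s - frozen_integrand pr k al (s / eps)) <= X r * X r * Rabs (s - al).
Proof.
 intros Hpr Hk Hal Hs. eapply Rle_trans; [apply (ypart_sub_le n Lam X P r); auto|].
 rewrite Rminus_eq_0, Rabs_R0, Rmult_0_r, Rplus_0_l, Rmult_assoc.
 apply Rmult_le_compat_l; auto.
Qed.

Lemma Ifun_part_le pr k e0 L (N : nat) tau : pr = fst \/ pr = snd -> (k < n)%nat ->
  0 <= e0 -> 0 <= L ->
  (forall pr b j, pr = fst \/ pr = snd -> vnorm n b < r -> (j < n)%nat ->
     almost_periods_dense (ypart pr Lam P b j) e0 L) ->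
  (0 < N)%nat -> Rabs tau <= th ->
  Rabs (pr (Ifun n Lam P eps a tau k))
    <= 2 * (X r * X r) * th * th / INR N + 2 * e0 * th + INR N * eps * (4 * X r * L).
Proof.
 intros Hpr Hk He0 HL0 HAP HN Ht.
 set (K := 2 * freq_bound n Lam * X r * (1 + r) / eps + X r * X r).
 assert (HK : 0 <= K).
 { pose proof (sumR_nonneg n (fun j => Rabs (Lam j)) ltac:(intros; apply Rabs_pos)). pose proof r_pos.
   unfold K, freq_bound. apply Rplus_le_le_0_compat; [|nra].
   apply Rmult_le_pos; [|apply Rlt_le, Rinv_0_lt_compat; lra].
   repeat apply Rmult_le_pos; lra. }
 set (Cf := fun s => pr (avgP n Lam P (a s) k)).
 assert (Hint : ex_RInt (fun s => integrand pr k s - Cf s) 0 tau).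
 { apply Rabs_le_between in Ht.
   apply ex_RInt_minus_R; [apply (ex_RInt_lipschitz_sym _ K th)|apply (ex_RInt_lipschitz_sym Cf (X r * X r) th)];
     try nra; try lra; intros; [apply integrand_lipschitz|apply avgP_solution_lipschitz]; auto. }
 replace (pr (Ifun n Lam P eps a tau k)) with (RInt (fun s => integrand pr k s - Cf s) 0 tau)
   by (rewrite <- Defs_RInt_eq by auto; destruct Hpr as [->| ->]; reflexivity).
 apply (averaging_estimate _ Cf (frozen_integrand pr k) th eps (X r * X r) K (2 * e0) (4 * X r * L));
   auto; try nra; intros.
 - apply integrand_lipschitz; auto.
 - apply avgP_solution_lipschitz; auto.
 - apply integrand_sub_frozen_le; auto.
 - apply (ex_RInt_ypart n Lam X P r); auto.
 - apply (avgP_uniform_mean n Lam X P r); auto.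
Qed.

Lemma vnorm_Ifun_le e0 L (N : nat) tau : 0 <= e0 -> 0 <= L ->
  (forall pr b j, pr = fst \/ pr = snd -> vnorm n b < r -> (j < n)%nat ->
     almost_periods_dense (ypart pr Lam P b j) e0 L) ->
  (0 < N)%nat -> Rabs tau <= th ->
  vnorm n (Ifun n Lam P eps a tau)
    <= 4 * INR n * (X r * X r) * th * th / INR N + 4 * INR n * th * e0 + INR N * eps * (8 * INR n * X r * L).
Proof.
 intros He0 HL0 HAP HN Ht. eapply Rle_trans; [apply vnorm_le_sum_Rabs|].
 set (B := 2 * (X r * X r) * th * th / INR N + 2 * e0 * th + INR N * eps * (4 * X r * L)).
 apply Rle_trans with (sumR n (fun _ => 2 * B)).
 - apply sumR_le. intros k Hk.
   pose proof (Ifun_part_le fst k e0 L N tau ltac:(auto) Hk He0 HL0 HAP HN Ht).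
   pose proof (Ifun_part_le snd k e0 L N tau ltac:(auto) Hk He0 HL0 HAP HN Ht).
   unfold B. lra.
 - rewrite sumR_const. unfold B. right. field. apply not_0_INR. lia.
Qed.

End Estimate.

(** * The majorant kappa *)

Lemma sup_majorant (S : R -> R -> Prop) B :
  (forall eps z, S eps z -> z <= B) ->
  (forall e, 0 < e -> exists d, 0 < d /\ forall eps z, eps < d -> S eps z -> z <= e) ->
  exists kappa : R -> R,
    (forall e, 0 < e -> exists d, 0 < d /\ forall eps, 0 < eps < d -> Rabs (kappa eps) < e) /\
    (forall eps z, S eps z -> z <= kappa eps).
Proof.
 intros HB Hsmall.
 set (U := fun eps z => z = 0 \/ S eps z).
 assert (Hlub : forall eps, exists m, is_lub (U eps) m).
 { intros eps. destruct (completeness (U eps)) as [m Hm]; [|exists 0; left; auto|exists m; auto].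
   exists (Rmax B 0). intros z [->|Hz]; [apply Rmax_r|].
   eapply Rle_trans; [apply (HB eps); auto|apply Rmax_l]. }
 set (kappa := fun eps => epsilon (inhabits 0) (is_lub (U eps))).
 assert (Hk : forall eps, is_lub (U eps) (kappa eps)) by (intros; apply epsilon_spec, Hlub).
 exists kappa. split; [|intros eps z Hz; apply (Hk eps); right; auto].
 intros e He. destruct (Hsmall (e / 2) ltac:(lra)) as [d [Hd Hz]]. exists d. split; auto.
 intros eps [Heps Hlt].
 assert (0 <= kappa eps) by (apply (Hk eps); left; auto).
 assert (kappa eps <= e / 2).
 { apply (Hk eps). intros z [->|Hs]; [lra|apply (Hz eps); auto]. }
 rewrite Rabs_pos_eq; lra.
Qed.

Lemma Rmult_div_succ_le x y : 0 <= x -> 0 <= y -> x * (y / (x + 1)) <= y.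
Proof.
 intros. replace (x * (y / (x + 1))) with (y - y / (x + 1)) by (field; lra).
 assert (0 <= y / (x + 1)) by (apply Rdiv_le_0_compat; lra). lra.
Qed.

(* Balancing the three error terms: first e0, then the number N of pieces, then eps. *)
Lemma tradeoff_small (S : R -> R -> Prop) A C : 0 <= A -> 0 <= C ->
  (forall e0, 0 < e0 -> exists L, 0 <= L /\
     forall (N : nat) eps z, (0 < N)%nat -> S eps z -> z <= A / INR N + C * e0 + INR N * eps * L) ->
  forall e, 0 < e -> exists d, 0 < d /\ forall eps z, eps < d -> S eps z -> z <= e.
Proof.
 intros HA HC H e He.
 destruct (H (e / 3 / (C + 1)) ltac:(apply Rdiv_lt_0_compat; lra)) as [L [HL HS]].
 destruct (archimed_nat 0 (3 * A / e)) as [j [_ Hj]].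
 set (N := Nat.succ j). assert (HN : INR N = INR j + 1) by (unfold N; rewrite S_INR; auto).
 pose proof (pos_INR j).
 assert (HNL : 0 <= INR N * L) by (rewrite HN; nra).
 pose proof (Rmult_div_succ_le C (e / 3) HC ltac:(lra)).
 pose proof (Rmult_div_succ_le (INR N * L) (e / 3) HNL ltac:(lra)).
 set (d := e / 3 / (INR N * L + 1)) in *.
 exists d. split; [unfold d; apply Rdiv_lt_0_compat; lra|]. intros eps z Hd Hz.
 eapply Rle_trans; [apply (HS N eps z (Nat.lt_0_succ j) Hz)|].
 assert (A / INR N <= e / 3).
 { rewrite HN. apply Rmult_le_reg_r with (INR j + 1); [lra|].
   replace (A / (INR j + 1) * (INR j + 1)) with A by (field; lra).
   assert (E : 3 * A = 3 * A / e * e) by (field; lra).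
   assert (3 * A / e * e <= (INR j + 1) * e) by (apply Rmult_le_compat_r; lra).
   lra. }
 assert (INR N * eps * L <= INR N * L * d) by nra.
 lra.
Qed.

Lemma tradeoff_majorant (S : R -> R -> Prop) A C : 0 <= A -> 0 <= C ->
  (forall eps z, S eps z -> eps <= 1) ->
  (forall e0, 0 < e0 -> exists L, 0 <= L /\
     forall (N : nat) eps z, (0 < N)%nat -> S eps z -> z <= A / INR N + C * e0 + INR N * eps * L) ->
  exists kappa : R -> R,
    (forall e, 0 < e -> exists d, 0 < d /\ forall eps, 0 < eps < d -> Rabs (kappa eps) < e) /\
    (forall eps z, S eps z -> z <= kappa eps).
Proof.
 intros HA HC Hle H. destruct (H 1 Rlt_0_1) as [L [HL HB]].
 apply (sup_majorant S (A + C + L)); [|apply tradeoff_small with A C; auto].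
 intros eps z Hz. pose proof (HB 1%nat eps z ltac:(lia) Hz) as Hz1. pose proof (Hle eps z Hz).
 simpl INR in Hz1. rewrite Rdiv_1_r, Rmult_1_r, Rmult_1_l in Hz1.
 assert (eps * L <= 1 * L) by (apply Rmult_le_compat_r; lra). lra.
Qed.

Theorem lemma4p2 (n : nat) (Lam : nat -> R) (X : R -> R) (P : vec -> vec) (R0 : R) :
  (forall k, (k < n)%nat -> Lam k <> 0) ->
  nondecr_cont_nonneg X ->
  Lip_X n X P ->
  0 < R0 -> 0 < X (2 * R0) ->
  exists kappa : R -> R,
    (forall e, 0 < e -> exists d, 0 < d /\
       forall eps, 0 < eps < d -> Rabs (kappa eps) < e) /\
    (forall (v0 : vec), vnorm n v0 <= R0 ->
     forall eps, 0 < eps <= 1 ->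
     forall a : R -> vec, is_solution n Lam P eps (R0 / X (2 * R0)) v0 a ->
     forall tau, Rabs tau <= R0 / X (2 * R0) ->
       vnorm n (Ifun n Lam P eps a tau) <= kappa eps).
Proof.
 intros _ _ HL HR HX.
 set (th := R0 / X (2 * R0)). set (r := 2 * R0 + 1).
 set (S := fun eps z => 0 < eps <= 1 /\ exists v0 a tau, vnorm n v0 <= R0 /\
             is_solution n Lam P eps th v0 a /\ Rabs tau <= th /\ z = vnorm n (Ifun n Lam P eps a tau)).
 assert (Hth : 0 <= th) by (apply Rlt_le, Rdiv_lt_0_compat; lra).
 pose proof (pos_INR n). pose proof (Lip_X_nonneg n X P r HL ltac:(unfold r; lra)).
 assert (HA : 0 <= 4 * INR n * (X r * X r) * th * th).
 { apply Rmult_le_pos; [|lra]. apply Rmult_le_pos; [|lra]. apply Rmult_le_pos; [lra|nra]. }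
 destruct (tradeoff_majorant S _ (4 * INR n * th) HA ltac:(nra)) as [kappa [Hk0 Hk]];
   [intros eps z [[_ ?] _]; auto| |].
 - intros e0 He0.
   destruct (ypart_almost_periodic n Lam X P r HL ltac:(unfold r; lra) e0 He0) as [L [HL0 HAP]].
   exists (8 * INR n * X r * L). split; [apply Rmult_le_pos; [nra|lra]|].
   intros N eps z HN [Heps [v0 [a [tau [Hv [Hs [Ht ->]]]]]]].
   apply (vnorm_Ifun_le n Lam X P R0 eps v0 a); auto; lra.
 - exists kappa. split; auto. intros v0 Hv eps Heps a Hs tau Ht.
   apply (Hk eps). split; auto. exists v0, a, tau. auto.
Qed.
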